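(* Let $\Omega\subset\mathbb{C}$ be a simply connected domain and let $(h,\mathcal{M},\mathcal{N})$ be a Weierstrass data of the second kind on $\Omega$. Define $g:=\frac{1}{h}$ and $\mathcal{P}:=\frac12\mathcal{N}$. Then there exists a $\mathcal{C}^2$ function $\mathcal{Q}:\Omega\to\mathbb{R}$ such that $$\mathcal{Q}_z=h\,\mathcal{M}_z-\frac{h^2}{2}\,\mathcal{N}_z .$$ Moreover, for any such $\mathcal{Q}$, the triple $(g,\mathcal{P},\mathcal{Q})$ is a Weierstrass data of the first kind on $\Omega$, and $$\frac{1}{\overline g}\left(\mathcal{P}_z-|g|^2\mathcal{Q}_z\right)=-\left(\mathcal{M}_z-(\mathrm{Re}\,h)\,\mathcal{N}_z\right).$$
   Context: $\Omega\subset\mathbb{R}^2\equiv\mathbb{C}$ has complex coordinate $z=u+iv$, and $\partial_z=\frac12(\partial_u-i\partial_v)$, $\partial_{\overline z}=\frac12(\partial_u+i\partial_v)$; subscripts denote partial derivatives. A Weierstrass data of the first kind on $\Omega$ is a triple $(g,\mathcal{P},\mathcal{Q})$ where $g:\Omega\to\mathbb{C}\setminus\{0\}$ and $\mathcal{P},\mathcal{Q}:\Omega\to\mathbb{R}$ are $\mathcal{C}^2$, satisfying $g_{\overline z}=0$, $\mathcal{P}_{z\overline z}=|g|^2\mathcal{Q}_{z\overline z}$, and $\mathcal{P}_z-|g|^2\mathcal{Q}_z\neq0$ at every point of $\Omega$. A Weierstrass data of the second kind on $\Omega$ is a triple $(h,\mathcal{M},\mathcal{N})$ where $h:\Omega\to\mathbb{C}\setminus\{0\}$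 and $\mathcal{M},\mathcal{N}:\Omega\to\mathbb{R}$ are $\mathcal{C}^2$, satisfying $h_{\overline z}=0$, $\mathcal{M}_{z\overline z}=(\mathrm{Re}\,h)\,\mathcal{N}_{z\overline z}$, and $\mathcal{M}_z-(\mathrm{Re}\,h)\,\mathcal{N}_z\neq0$ at every point of $\Omega$. *)

From Stdlib Require Import Reals.
From Coquelicot Require Import Coquelicot.

Open Scope R_scope.

Definition pu (f : C -> R) (z : C) : R := Derive (fun t => f (t, snd z)) (fst z).
Definition pv (f : C -> R) (z : C) : R := Derive (fun t => f (fst z, t)) (snd z).

Definition C2_on_R (Omega : C -> Prop) (f : C -> R) : Prop :=
  forall z, Omega z ->
    ex_derive (fun t => f (t, snd z)) (fst z) /\
    ex_derive (fun t => f (fst z, t)) (snd z) /\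
    ex_derive (fun t => pu f (t, snd z)) (fst z) /\
    ex_derive (fun t => pu f (fst z, t)) (snd z) /\
    ex_derive (fun t => pv f (t, snd z)) (fst z) /\
    ex_derive (fun t => pv f (fst z, t)) (snd z) /\
    continuous f z /\ continuous (pu f) z /\ continuous (pv f) z /\
    continuous (pu (pu f)) z /\ continuous (pv (pu f)) z /\
    continuous (pu (pv f)) z /\ continuous (pv (pv f)) z.

Definition C2_on_C (Omega : C -> Prop) (F : C -> C) : Prop :=
  C2_on_R Omega (fun z => Re (F z)) /\ C2_on_R Omega (fun z => Im (F z)).

Open Scope C_scope.

Definition Cpu (F : C -> C) (z : C) : C :=
  (pu (fun w => Re (F w)) z, pu (fun w => Im (F w)) z).
Definition Cpv (F : C -> C) (z : C) : C :=
  (pv (fun w => Re (F w)) z, pv (fun w => Im (F w)) z).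

Definition dz (F : C -> C) (z : C) : C := / 2 * (Cpu F z - Ci * Cpv F z).
Definition dzb (F : C -> C) (z : C) : C := / 2 * (Cpu F z + Ci * Cpv F z).

Definition toC (f : C -> R) : C -> C := fun z => RtoC (f z).

Definition continuous_on {T U : UniformSpace} (D : T -> Prop) (f : T -> U) : Prop :=
  forall x, D x -> filterlim f (within D (locally x)) (locally (f x)).

Definition unit_interval (t : R) : Prop := (0 <= t <= 1)%R.
Definition unit_square (p : R * R) : Prop :=
  unit_interval (fst p) /\ unit_interval (snd p).

Definition is_domain (Omega : C -> Prop) : Prop :=
  (exists z, Omega z) /\ open Omega /\
  forall a b, Omega a -> Omega b ->
    exists gamma : R -> C,
      continuous_on unit_interval gamma /\
      (forall t, unit_interval t -> Omega (gamma t)) /\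
      gamma 0%R = a /\ gamma 1%R = b.

(** Simply connected domain: a domain in which every closed loop is
    (freely) homotopic within Omega to a constant loop. *)
Definition simply_connected_domain (Omega : C -> Prop) : Prop :=
  is_domain Omega /\
  forall gamma : R -> C,
    continuous_on unit_interval gamma ->
    (forall t, unit_interval t -> Omega (gamma t)) ->
    gamma 0%R = gamma 1%R ->
    exists H : R * R -> C,
      continuous_on unit_square H /\
      (forall p, unit_square p -> Omega (H p)) /\
      (forall t, unit_interval t -> H (0%R, t) = gamma t) /\
      (forall t, unit_interval t -> H (1%R, t) = H (1%R, 0%R)) /\
      (forall s, unit_interval s -> H (s, 0%R) = H (s, 1%R)).

Definition WD_first (Omega : C -> Prop) (g : C -> C) (P Q : C -> R) : Prop :=
  C2_on_C Omega g /\ C2_on_R Omega P /\ C2_on_R Omega Q /\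
  forall z, Omega z ->
    g z <> 0 /\
    dzb g z = 0 /\
    dzb (dz (toC P)) z = RtoC (Cmod (g z) ^ 2) * dzb (dz (toC Q)) z /\
    dz (toC P) z - RtoC (Cmod (g z) ^ 2) * dz (toC Q) z <> 0.

Definition WD_second (Omega : C -> Prop) (h : C -> C) (M N : C -> R) : Prop :=
  C2_on_C Omega h /\ C2_on_R Omega M /\ C2_on_R Omega N /\
  forall z, Omega z ->
    h z <> 0 /\
    dzb h z = 0 /\
    dzb (dz (toC M)) z = RtoC (Re (h z)) * dzb (dz (toC N)) z /\
    dz (toC M) z - RtoC (Re (h z)) * dz (toC N) z <> 0.

(* With [A = M_z] and [B = N_z], the prescribed [F = h A - h^2/2 B] satisfies
   [F_zbar = h (Re h) B_zbar - h^2/2 B_zbar = |h|^2/2 B_zbar], because [h] is holomorphic and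
   [A_zbar = (Re h) B_zbar]; as [B_zbar = N_{z zbar}] is real, so is [F_zbar].  For a real [Q],
   [Q_z = F] means [dQ = 2 Re F du - 2 Im F dv], and reality of [F_zbar] is exactly closedness of
   this form.  On a simply connected domain closed forms are exact: local primitives on squares are
   continued along paths, and the continuation along a loop returns to its start because the
   loop contracts.  The properties of [(1/h, N/2, Q)] then follow from [Q_{z zbar} = F_zbar] and
   an algebraic identity. *)

From Stdlib Require Import Reals Lra.
From Coquelicot Require Import Coquelicot.
From Stdlib Require Import ClassicalEpsilon Classical.

Open Scope R_scope.

(* The balls of Coquelicot's product topology on [C = R * R] are open squares. *)
Definition in_square (c : C) (r : R) (z : C) : Prop :=
  Rabs (fst z - fst c) < r /\ Rabs (snd z - snd c) < r.

Lemma ball_in_square (c z : C) (r : R) : ball c r z <-> in_square c r z.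
Proof. split; intros [H1 H2]; split; assumption. Qed.

Lemma Rabs_diag_lt (t : R) (e : posreal) : Rabs (t - t) < e.
Proof. rewrite Rminus_diag, Rabs_R0. apply cond_pos. Qed.

Lemma in_square_center (c : C) (r : R) : 0 < r -> in_square c r c.
Proof. intros Hr. split; rewrite Rminus_diag, Rabs_R0; exact Hr. Qed.

Lemma in_square_sym c r z : in_square c r z -> in_square z r c.
Proof. intros [H1 H2]. split; rewrite Rabs_minus_sym; auto. Qed.

Lemma in_square_mono c r r' z : r <= r' -> in_square c r z -> in_square c r' z.
Proof. intros H [H1 H2]. split; lra. Qed.

Lemma in_square_trans c x y e1 e2 :
  in_square c e1 x -> in_square x e2 y -> in_square c (e1 + e2) y.
Proof.
  intros [H1 H2] [H3 H4]. split.
  - replace (fst y - fst c) with ((fst y - fst x) + (fst x - fst c)) by ring.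
    eapply Rle_lt_trans; [apply Rabs_triang|]. lra.
  - replace (snd y - snd c) with ((snd y - snd x) + (snd x - snd c)) by ring.
    eapply Rle_lt_trans; [apply Rabs_triang|]. lra.
Qed.

Lemma in_square_square_nbhd (c : C) r z :
  in_square c r z -> exists e : posreal, forall w, in_square z e w -> in_square c r w.
Proof.
  intros [H1 H2].
  set (e := Rmin (r - Rabs (fst z - fst c)) (r - Rabs (snd z - snd c))).
  assert (He : 0 < e) by (apply Rmin_glb_lt; lra).
  pose proof (Rmin_l (r - Rabs (fst z - fst c)) (r - Rabs (snd z - snd c))).
  pose proof (Rmin_r (r - Rabs (fst z - fst c)) (r - Rabs (snd z - snd c))).
  exists (mkposreal _ He). intros w [W1 W2]; simpl in W1, W2.
  pose proof (Rabs_triang (fst w - fst z) (fst z - fst c)).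
  pose proof (Rabs_triang (snd w - snd z) (snd z - snd c)).
  split; [replace (fst w - fst c) with ((fst w - fst z) + (fst z - fst c)) by ring
         |replace (snd w - snd c) with ((snd w - snd z) + (snd z - snd c)) by ring];
  unfold e in *; lra.
Qed.

Lemma open_square_nbhd (Omega : C -> Prop) z : open Omega -> Omega z ->
  exists r : posreal, forall w, in_square z r w -> Omega w.
Proof.
  intros Ho Hz. destruct (Ho z Hz) as [r Hr]. exists r. intros w Hw.
  apply Hr, ball_in_square, Hw.
Qed.

Lemma locally_of_square (z : C) (P : C -> Prop) (e : posreal) :
  (forall w, in_square z e w -> P w) -> locally z P.
Proof. intros H. exists e. intros w Hw. apply H, ball_in_square, Hw. Qed.

Lemma in_square_locally (c : C) r (z : C) : in_square c r z -> locally z (in_square c r).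
Proof. intros H. destruct (in_square_square_nbhd c r z H) as [e He]. exact (locally_of_square _ _ e He). Qed.

Lemma locally_of_open (Omega P : C -> Prop) z :
  open Omega -> Omega z -> (forall w, Omega w -> P w) -> locally z P.
Proof. intros Ho Hz H. eapply filter_imp; [|exact (Ho z Hz)]. auto. Qed.

Lemma locally_hline (z : C) (P : C -> Prop) :
  locally z P -> locally (fst z) (fun t => P (t, snd z)).
Proof. intros [e He]. exists e. intros y Hy. apply He. split; [exact Hy | apply Rabs_diag_lt]. Qed.

Lemma locally_vline (z : C) (P : C -> Prop) :
  locally z P -> locally (snd z) (fun t => P (fst z, t)).
Proof. intros [e He]. exists e. intros y Hy. apply He. split; [apply Rabs_diag_lt | exact Hy]. Qed.

Lemma continuous_square_elim (f : C -> R) z : continuous f z ->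
  forall eps : posreal, exists d : posreal, forall w,
    Rabs (fst w - fst z) < d -> Rabs (snd w - snd z) < d -> Rabs (f w - f z) < eps.
Proof.
  intros Hc eps. destruct (Hc (ball (f z) eps) (locally_ball _ eps)) as [d Hd].
  exists d. intros w H1 H2. apply Hd. split; assumption.
Qed.

Lemma continuous_square_intro (f : C -> R) z :
  (forall eps : posreal, exists d : posreal, forall w,
    Rabs (fst w - fst z) < d -> Rabs (snd w - snd z) < d -> Rabs (f w - f z) < eps) ->
  continuous f z.
Proof.
  intros H P [eps HP]. destruct (H eps) as [d Hd]. exists d.
  intros w [H1 H2]. apply HP, Hd; assumption.
Qed.

Lemma continuous_hline (f : C -> R) (z : C) : continuous f z ->
  continuous (fun t => f (t, snd z)) (fst z).
Proof.
  destruct z as [x y]. intros Hc P [eps HP]. destruct (Hc _ (locally_ball (f (x, y)) eps)) as [d Hd].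
  exists d. intros t Ht. apply HP, Hd. split; [exact Ht | apply Rabs_diag_lt].
Qed.

Lemma continuous_vline (f : C -> R) (z : C) : continuous f z ->
  continuous (fun t => f (fst z, t)) (snd z).
Proof.
  destruct z as [x y]. intros Hc P [eps HP]. destruct (Hc _ (locally_ball (f (x, y)) eps)) as [d Hd].
  exists d. intros t Ht. apply HP, Hd. split; [apply Rabs_diag_lt | exact Ht].
Qed.

Lemma continuity_2d_pt_of_continuous (f : C -> R) (x y : R) : continuous f (x, y) ->
  continuity_2d_pt (fun u v => f (u, v)) x y.
Proof.
  intros Hc eps. destruct (continuous_square_elim f _ Hc eps) as [d Hd].
  exists d. intros u v Hu Hv. apply (Hd (u, v)); assumption.
Qed.

(** * Primitives of closed forms on squares *)

Definition is_primitive (U : C -> Prop) (a b : C -> R) (G : C -> R) : Prop :=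
  forall z, U z -> is_derive (fun t => G (t, snd z)) (fst z) (a z) /\
                   is_derive (fun t => G (fst z, t)) (snd z) (b z).

Definition closed_form (U : C -> Prop) (a b : C -> R) : Prop :=
  forall z, U z -> continuous a z /\ continuous b z /\
    ex_derive (fun t => a (fst z, t)) (snd z) /\
    ex_derive (fun t => b (t, snd z)) (fst z) /\
    continuous (pv a) z /\ continuous (pu b) z /\ pv a z = pu b z.

Lemma closed_form_subset (U V : C -> Prop) a b :
  (forall z, U z -> V z) -> closed_form V a b -> closed_form U a b.
Proof. intros H Hc z Hz. apply Hc. auto. Qed.

Lemma Rabs_between a b s : Rmin a b <= s <= Rmax a b -> Rabs (s - a) <= Rabs (b - a).
Proof.
  intros H. unfold Rmin, Rmax in H. destruct (Rle_dec a b);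
  repeat (unfold Rabs; destruct Rcase_abs); lra.
Qed.

Lemma Rabs_between_lt x1 x2 t c r : Rmin x1 x2 <= t <= Rmax x1 x2 ->
  Rabs (x1 - c) < r -> Rabs (x2 - c) < r -> Rabs (t - c) < r.
Proof.
  intros H. unfold Rmin, Rmax in H. destruct (Rle_dec x1 x2);
  repeat (unfold Rabs; destruct Rcase_abs); lra.
Qed.

Lemma in_square_vsegment c r x y s :
  in_square c r (x, y) -> Rmin (snd c) y <= s <= Rmax (snd c) y -> in_square c r (x, s).
Proof. intros [H1 H2] Hs. apply Rabs_between in Hs. split; simpl in *; lra. Qed.

Lemma in_square_hsegment c r x s : 0 < r -> Rabs (x - fst c) < r ->
  Rmin (fst c) x <= s <= Rmax (fst c) x -> in_square c r (s, snd c).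
Proof.
  intros Hr H1 Hs. apply Rabs_between in Hs. split; simpl; [lra|].
  rewrite Rminus_diag, Rabs_R0. exact Hr.
Qed.

Lemma is_derive_RInt_upper (f : R -> R) a x :
  locally x (fun x' => forall t, Rmin a x' <= t <= Rmax a x' -> continuous f t) ->
  continuous f x -> is_derive (fun t => RInt f a t) x (f x).
Proof.
  intros Hl Hc. apply (is_derive_RInt f (fun t => RInt f a t) a x); auto.
  eapply filter_imp; [|exact Hl]. intros x' Hx'. apply (RInt_correct f).
  apply ex_RInt_continuous. exact Hx'.
Qed.

Definition square_potential (a b : C -> R) (c z : C) : R :=
  RInt (fun t => a (t, snd c)) (fst c) (fst z) + RInt (fun s => b (fst z, s)) (snd c) (snd z).

Section SquarePotential.

Variables (a b : C -> R) (c : C) (r : R).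
Hypothesis Hcf : closed_form (in_square c r) a b.

Lemma square_potential_hderive x y : in_square c r (x, y) ->
  is_derive (fun t => square_potential a b c (t, y)) x (a (x, y)).
Proof.
  intros Hz. unfold square_potential; simpl.
  assert (Hr : 0 < r) by (destruct Hz as [H1 _]; pose proof (Rabs_pos (x - fst c)); simpl in H1; lra).
  pose proof (locally_hline _ _ (in_square_locally c r (x, y) Hz)) as Hl; simpl in Hl.
  assert (Ha : is_derive (fun t => RInt (fun t0 => a (t0, snd c)) (fst c) t) x (a (x, snd c))).
  { apply (is_derive_RInt_upper (fun t0 => a (t0, snd c))).
    - eapply filter_imp; [|exact Hl]. intros x' Hx' t Ht.
      assert (Hs : in_square c r (t, snd c)) by (apply (in_square_hsegment c r x'); auto; apply Hx').
      exact (continuous_hline a (t, snd c) (proj1 (Hcf _ Hs))).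
    - assert (Hs : in_square c r (x, snd c)).
      { apply (in_square_hsegment c r x); auto. apply Hz. split; [apply Rmin_r | apply Rmax_r]. }
      exact (continuous_hline a (x, snd c) (proj1 (Hcf _ Hs))). }
  assert (Hb : is_derive (fun t => RInt (fun s => b (t, s)) (snd c) y) x
                 (RInt (fun s => Derive (fun u => b (u, s)) x) (snd c) y)).
  { apply (is_derive_RInt_param (fun u s => b (u, s))).
    - eapply filter_imp; [|exact Hl]. intros x' Hx' t Ht.
      apply (Hcf (x', t)), (in_square_vsegment c r x' y); auto.
    - intros t Ht. apply (continuity_2d_pt_of_continuous (pu b) x t).
      apply (Hcf (x, t)), (in_square_vsegment c r x y); auto.
    - eapply filter_imp; [|exact Hl]. intros x' Hx'.
      apply (@ex_RInt_continuous R_CompleteNormedModule). intros t Ht.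
      apply (continuous_vline b (x', t)), (Hcf (x', t)), (in_square_vsegment c r x' y); auto. }
  (* the closedness [pv a = pu b] turns the integral of [pu b] into an increment of [a] *)
  assert (HI : RInt (fun s => Derive (fun u => b (u, s)) x) (snd c) y = a (x, y) - a (x, snd c)).
  { rewrite <- (RInt_Derive (fun s => a (x, s))).
    - apply RInt_ext. intros t Ht.
      assert (Hs : in_square c r (x, t)).
      { apply (in_square_vsegment c r x y); auto. split; apply Rlt_le; apply Ht. }
      destruct (Hcf _ Hs) as [_ [_ [_ [_ [_ [_ He]]]]]]. exact (eq_sym He).
    - intros t Ht. apply (Hcf (x, t)), (in_square_vsegment c r x y); auto.
    - intros t Ht.
      assert (Hs : in_square c r (x, t)) by (apply (in_square_vsegment c r x y); auto).
      destruct (Hcf _ Hs) as [_ [_ [_ [_ [Hpva _]]]]].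
      exact (continuous_vline (pv a) (x, t) Hpva). }
  rewrite HI in Hb.
  replace (a (x, y)) with (a (x, snd c) + (a (x, y) - a (x, snd c))) by ring.
  exact (is_derive_plus _ _ _ _ _ Ha Hb).
Qed.

Lemma square_potential_vderive x y : in_square c r (x, y) ->
  is_derive (fun t => square_potential a b c (x, t)) y (b (x, y)).
Proof.
  intros Hz. unfold square_potential; simpl.
  replace (b (x, y)) with (0 + b (x, y)) by ring.
  apply (is_derive_plus (fun _ => RInt (fun t0 => a (t0, snd c)) (fst c) x)
                        (fun t => RInt (fun s => b (x, s)) (snd c) t)).
  - apply (is_derive_const (K:=R_AbsRing) (V:=R_NormedModule)).
  - apply (is_derive_RInt_upper (fun s => b (x, s))).
    + pose proof (locally_vline _ _ (in_square_locally c r (x, y) Hz)) as Hl; simpl in Hl.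
      eapply filter_imp; [|exact Hl]. intros y' Hy' t Ht.
      apply (continuous_vline b (x, t)), (Hcf (x, t)), (in_square_vsegment c r x y'); auto.
    + exact (continuous_vline b (x, y) (proj1 (proj2 (Hcf _ Hz)))).
Qed.

Lemma square_primitive : is_primitive (in_square c r) a b (square_potential a b c).
Proof.
  intros [x y] Hz. split; [apply square_potential_hderive | apply square_potential_vderive]; exact Hz.
Qed.

End SquarePotential.

Lemma pmin_gt0 (a b : posreal) : 0 < Rmin a b.
Proof. apply Rmin_glb_lt; apply cond_pos. Qed.

Definition pmin (a b : posreal) : posreal := mkposreal _ (pmin_gt0 a b).

Lemma pmin_l (a b : posreal) : pmin a b <= a.
Proof. apply Rmin_l. Qed.

Lemma pmin_r (a b : posreal) : pmin a b <= b.
Proof. apply Rmin_r. Qed.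

Lemma half_posreal_gt0 (d : posreal) : 0 < d / 2.
Proof. pose proof (cond_pos d). lra. Qed.

Definition half_posreal (d : posreal) : posreal := mkposreal _ (half_posreal_gt0 d).

Lemma eq_of_derive_zero (f : R -> R) x y :
  (forall t, Rmin x y <= t <= Rmax x y -> is_derive f t 0) -> f x = f y.
Proof.
  intros H. destruct (MVT_gen f x y (fun _ => 0)) as [c [_ Hc]].
  - intros t Ht. apply H. split; apply Rlt_le; apply Ht.
  - intros t Ht. apply continuity_pt_filterlim. apply (ex_derive_continuous (K:=R_AbsRing) (V:=R_NormedModule)).
    exists 0. apply H. exact Ht.
  - lra.
Qed.

Definition clamp (al be x : R) := Rmax al (Rmin be x).

Lemma clamp_in al be x : al <= be -> al <= clamp al be x <= be.
Proof. intros H. unfold clamp, Rmax, Rmin. repeat destruct Rle_dec; lra. Qed.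

Lemma clamp_id al be x : al <= x <= be -> clamp al be x = x.
Proof. intros H. unfold clamp, Rmax, Rmin. repeat destruct Rle_dec; lra. Qed.

Lemma clamp_lip al be x y : al <= be -> Rabs (clamp al be x - clamp al be y) <= Rabs (x - y).
Proof.
  intros H. unfold clamp, Rmax, Rmin.
  repeat destruct Rle_dec; repeat (unfold Rabs; destruct Rcase_abs); lra.
Qed.

(* After clamping to [[al, be]], local constancy becomes a zero derivative on all of [R]. *)
Lemma locally_constant_interval (f : R -> R) al be :
  al <= be ->
  (forall t, al <= t <= be -> exists eps : posreal, forall s, al <= s <= be -> Rabs (s - t) < eps -> f s = f t) ->
  forall s, al <= s <= be -> f s = f al.
Proof.
  intros Hab H s Hs.
  set (g := fun x => f (clamp al be x)).
  assert (Hd : forall x, is_derive g x 0).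
  { intros x. destruct (H (clamp al be x) (clamp_in al be x Hab)) as [eps He].
    apply (is_derive_ext_loc (fun _ => g x)).
    - exists eps. intros y Hy. change (Rabs (y - x) < eps) in Hy. unfold g. symmetry. apply He.
      + apply clamp_in; auto.
      + pose proof (clamp_lip al be y x Hab). lra.
    - apply (is_derive_const (K:=R_AbsRing) (V:=R_NormedModule)). }
  pose proof (eq_of_derive_zero g s al (fun t _ => Hd t)) as E.
  unfold g in E. rewrite !clamp_id in E; auto. lra.
Qed.

Lemma lebesgue_number al be (P : R -> posreal -> Prop) :
  (forall t, al <= t <= be -> exists d, P t d) ->
  exists d : posreal, forall x, al <= x <= be ->
    exists t (dt : posreal), al <= t <= be /\ P t dt /\ Rabs (x - t) < dt / 2 /\ d <= dt / 2.
Proof.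
  intros HP.
  destruct (choice (fun t d => al <= t <= be -> P t d)) as [del Hdel].
  { intros t. destruct (Rle_dec al t) as [H1|H1]; [destruct (Rle_dec t be) as [H2|H2]|].
    - destruct (HP t (conj H1 H2)) as [d Hd]. exists d. auto.
    - exists (mkposreal 1 Rlt_0_1). intros H. lra.
    - exists (mkposreal 1 Rlt_0_1). intros H. lra. }
  destruct (compactness_value_1d al be (fun t => half_posreal (del t))) as [d Hd].
  exists d. intros x Hx. apply NNPP. intro Hneg.
  apply (Hd x Hx). intros [t [Ht [Hxt Hdt]]]. apply Hneg.
  exists t, (del t). auto.
Qed.

(** * Paths and homotopies *)

Definition path_cont (al be : R) (ga : R -> C) : Prop :=
  forall t, al <= t <= be -> forall e : posreal, exists d : posreal,
    forall s, al <= s <= be -> Rabs (s - t) < d -> in_square (ga t) e (ga s).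

Lemma path_cont_sub al be al' be' ga : al <= al' -> be' <= be -> path_cont al be ga -> path_cont al' be' ga.
Proof.
  intros H1 H2 Hc t Ht e. destruct (Hc t ltac:(lra) e) as [d Hd]. exists d.
  intros s Hs Hst. apply Hd; auto. lra.
Qed.

Lemma path_cont_ext al be ga ga' :
  (forall s, al <= s <= be -> ga s = ga' s) -> path_cont al be ga -> path_cont al be ga'.
Proof.
  intros E H t Ht e. destruct (H t Ht e) as [d Hd]. exists d. intros s Hs Hst.
  rewrite <- !E; auto.
Qed.

Lemma path_cont_glue al m be ga :
  al <= m <= be -> path_cont al m ga -> path_cont m be ga -> path_cont al be ga.
Proof.
  intros Hm H1 H2 t Ht e.
  destruct (Rtotal_order t m) as [Hlt | [Heq | Hgt]].
  - destruct (H1 t ltac:(lra) e) as [d Hd]. assert (Hp : 0 < m - t) by lra.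
    exists (pmin d (mkposreal _ Hp)). intros s Hs Hst.
    pose proof (pmin_l d (mkposreal _ Hp)). pose proof (pmin_r d (mkposreal _ Hp)). simpl in *.
    assert (s < m) by (unfold Rabs in Hst; destruct Rcase_abs in Hst; lra).
    apply Hd; lra.
  - subst t. destruct (H1 m ltac:(lra) e) as [d1 Hd1]. destruct (H2 m ltac:(lra) e) as [d2 Hd2].
    exists (pmin d1 d2). intros s Hs Hst.
    pose proof (pmin_l d1 d2). pose proof (pmin_r d1 d2).
    destruct (Rle_dec s m). apply Hd1; lra. apply Hd2; lra.
  - destruct (H2 t ltac:(lra) e) as [d Hd]. assert (Hp : 0 < t - m) by lra.
    exists (pmin d (mkposreal _ Hp)). intros s Hs Hst.
    pose proof (pmin_l d (mkposreal _ Hp)). pose proof (pmin_r d (mkposreal _ Hp)). simpl in *.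
    assert (s > m) by (unfold Rabs in Hst; destruct Rcase_abs in Hst; lra).
    apply Hd; lra.
Qed.

Definition reparam (al be al' be' : R) (sig : R -> R) : Prop :=
  (forall t, al' <= t <= be' -> al <= sig t <= be) /\
  forall t, al' <= t <= be' -> forall e : posreal, exists d : posreal,
    forall s, al' <= s <= be' -> Rabs (s - t) < d -> Rabs (sig s - sig t) < e.

Lemma path_cont_reparam al be al' be' ga sig :
  reparam al be al' be' sig -> path_cont al be ga -> path_cont al' be' (fun t => ga (sig t)).
Proof.
  intros [Hin Hc] H t Ht e. destruct (H (sig t) (Hin t Ht) e) as [d1 Hd1].
  destruct (Hc t Ht d1) as [d Hd]. exists d. intros s Hs Hst. apply Hd1; auto.
Qed.

Lemma reparam_affine al be al' be' p q :
  (forall t, al' <= t <= be' -> al <= p * t + q <= be) ->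
  reparam al be al' be' (fun t => p * t + q).
Proof.
  intros Hin. split; auto. intros t Ht e.
  assert (Hp : 0 < e / (Rabs p + 1)).
  { apply Rdiv_lt_0_compat. apply cond_pos. pose proof (Rabs_pos p). lra. }
  exists (mkposreal _ Hp). intros s Hs Hst. simpl in Hst.
  replace (p * s + q - (p * t + q)) with (p * (s - t)) by ring.
  rewrite Rabs_mult. pose proof (Rabs_pos p). pose proof (Rabs_pos (s - t)).
  apply Rle_lt_trans with ((Rabs p + 1) * Rabs (s - t)). nra.
  apply Rmult_lt_reg_l with (/ (Rabs p + 1)). apply Rinv_0_lt_compat. lra.
  rewrite <- Rmult_assoc, Rinv_l by lra. rewrite Rmult_1_l.
  unfold Rdiv in Hst. lra.
Qed.

Definition is_path (Om : C -> Prop) (ga : R -> C) : Prop :=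
  path_cont 0 1 ga /\ forall s, 0 <= s <= 1 -> Om (ga s).

Definition path_concat (g1 g2 : R -> C) : R -> C :=
  fun t => if Rle_dec t (1/2) then g1 (2 * t) else g2 (2 * t - 1).

Lemma path_concat_0 g1 g2 : path_concat g1 g2 0 = g1 0.
Proof. unfold path_concat. destruct (Rle_dec 0 (1/2)); [|lra]. f_equal. ring. Qed.

Lemma path_concat_1 g1 g2 : path_concat g1 g2 1 = g2 1.
Proof. unfold path_concat. destruct (Rle_dec 1 (1/2)); [lra|]. f_equal. ring. Qed.

Lemma path_concat_is_path Om g1 g2 :
  is_path Om g1 -> is_path Om g2 -> g1 1 = g2 0 -> is_path Om (path_concat g1 g2).
Proof.
  intros [C1 O1] [C2 O2] E. split.
  - apply (path_cont_glue 0 (1/2) 1); [lra| |].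
    + apply (path_cont_ext 0 (1/2) (fun t => g1 (2 * t + 0))).
      { intros s Hs. unfold path_concat. destruct (Rle_dec s (1/2)); [|lra]. f_equal; try ring. }
      apply (path_cont_reparam 0 1); auto. apply reparam_affine. intros; lra.
    + apply (path_cont_ext (1/2) 1 (fun t => g2 (2 * t + -1))).
      { intros s Hs. unfold path_concat. destruct (Rle_dec s (1/2)).
        - assert (s = 1/2) by lra. subst s. replace (2 * (1/2) + -1) with 0 by field.
          replace (2 * (1/2)) with 1 by field. auto.
        - f_equal; try ring. }
      apply (path_cont_reparam 0 1); auto. apply reparam_affine. intros; lra.
  - intros s Hs. unfold path_concat. destruct (Rle_dec s (1/2)); [apply O1|apply O2]; lra.
Qed.

Definition path_rev (g : R -> C) : R -> C := fun t => g (1 - t).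

Lemma path_rev_is_path Om g : is_path Om g -> is_path Om (path_rev g).
Proof.
  intros [Cg Og]. split.
  - apply (path_cont_ext 0 1 (fun t => g (-1 * t + 1))).
    { intros s Hs. unfold path_rev. f_equal; try ring. }
    apply (path_cont_reparam 0 1); auto. apply reparam_affine. intros; lra.
  - intros s Hs. unfold path_rev. apply Og. lra.
Qed.

Definition segment (z w : C) : R -> C :=
  fun t => (fst z + t * (fst w - fst z), snd z + t * (snd w - snd z)).

Lemma Rabs_scal_diff_lt (t s k e : R) : 0 < e -> Rabs (s - t) < e / (Rabs k + 1) ->
  Rabs (s * k - t * k) < e.
Proof.
  intros He H. replace (s * k - t * k) with ((s - t) * k) by ring. rewrite Rabs_mult.
  pose proof (Rabs_pos k). pose proof (Rabs_pos (s - t)).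
  apply Rle_lt_trans with (Rabs (s - t) * (Rabs k + 1)). nra.
  apply Rmult_lt_reg_r with (/ (Rabs k + 1)). apply Rinv_0_lt_compat. lra.
  rewrite Rmult_assoc, Rinv_r by lra. rewrite Rmult_1_r. unfold Rdiv in H. lra.
Qed.

Lemma segment_path_cont z w : path_cont 0 1 (segment z w).
Proof.
  intros t Ht e.
  set (k := Rabs (fst w - fst z) + Rabs (snd w - snd z)).
  assert (Hp : 0 < e / (k + 1)).
  { apply Rdiv_lt_0_compat; [apply cond_pos|].
    unfold k. pose proof (Rabs_pos (fst w - fst z)). pose proof (Rabs_pos (snd w - snd z)). lra. }
  exists (mkposreal _ Hp). intros s Hs Hst. simpl in Hst. unfold segment. split; simpl.
  - replace (fst z + s * (fst w - fst z) - (fst z + t * (fst w - fst z))) with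
      (s * (fst w - fst z) - t * (fst w - fst z)) by ring.
    apply Rabs_scal_diff_lt. apply cond_pos.
    eapply Rlt_le_trans; [exact Hst|]. apply Rmult_le_compat_l. apply Rlt_le, cond_pos.
    apply Rinv_le_contravar. pose proof (Rabs_pos (fst w - fst z)). lra.
    unfold k. pose proof (Rabs_pos (snd w - snd z)). lra.
  - replace (snd z + s * (snd w - snd z) - (snd z + t * (snd w - snd z))) with
      (s * (snd w - snd z) - t * (snd w - snd z)) by ring.
    apply Rabs_scal_diff_lt. apply cond_pos.
    eapply Rlt_le_trans; [exact Hst|]. apply Rmult_le_compat_l. apply Rlt_le, cond_pos.
    apply Rinv_le_contravar. pose proof (Rabs_pos (snd w - snd z)). lra.
    unfold k. pose proof (Rabs_pos (fst w - fst z)). lra.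
Qed.

Lemma segment_in_square z w r s : in_square z r w -> 0 <= s <= 1 -> in_square z r (segment z w s).
Proof.
  intros [H1 H2] Hs. unfold segment. split; simpl.
  - replace (fst z + s * (fst w - fst z) - fst z) with (s * (fst w - fst z)) by ring.
    rewrite Rabs_mult, (Rabs_pos_eq s) by lra. pose proof (Rabs_pos (fst w - fst z)). nra.
  - replace (snd z + s * (snd w - snd z) - snd z) with (s * (snd w - snd z)) by ring.
    rewrite Rabs_mult, (Rabs_pos_eq s) by lra. pose proof (Rabs_pos (snd w - snd z)). nra.
Qed.

Lemma segment_0 z w : segment z w 0 = z.
Proof. destruct z; unfold segment; simpl; f_equal; ring. Qed.

Lemma segment_1 z w : segment z w 1 = w.
Proof. destruct z, w; unfold segment; simpl; f_equal; ring. Qed.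

Definition square_cont (H : R * R -> C) : Prop :=
  forall p, unit_square p -> forall e : posreal, exists d : posreal,
    forall q, unit_square q -> Rabs (fst q - fst p) < d -> Rabs (snd q - snd p) < d ->
      in_square (H p) e (H q).

Lemma square_cont_of_continuous_on (H : R * R -> C) : continuous_on unit_square H -> square_cont H.
Proof.
  intros Hc p Hp e. destruct (Hc p Hp (ball (H p) e) (locally_ball _ e)) as [d Hd].
  exists d. intros q Hq H1 H2. apply ball_in_square. apply Hd; auto. split; auto.
Qed.

Lemma path_cont_of_continuous_on (ga : R -> C) : continuous_on unit_interval ga -> path_cont 0 1 ga.
Proof.
  intros Hc t Ht e. destruct (Hc t Ht (ball (ga t) e) (locally_ball _ e)) as [d Hd].
  exists d. intros s Hs Hst. apply ball_in_square. apply Hd; auto.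
Qed.

Lemma continuous_on_of_path_cont (ga : R -> C) : path_cont 0 1 ga -> continuous_on unit_interval ga.
Proof.
  intros Hc t Ht P [e HP]. destruct (Hc t Ht e) as [d Hd]. exists d.
  intros s Hs HsD. apply HP. apply ball_in_square. apply Hd; auto.
Qed.

Lemma square_cont_row H s : square_cont H -> 0 <= s <= 1 -> path_cont 0 1 (fun t => H (s, t)).
Proof.
  intros Hc Hs t Ht e. destruct (Hc (s, t) (conj Hs Ht) e) as [d Hd]. exists d.
  intros t' Ht' Htt. apply Hd; simpl; auto. split; auto.
  replace (s - s) with 0 by ring. rewrite Rabs_R0. apply cond_pos.
Qed.

Lemma path_uniform_radius Om al be ga :
  open Om -> path_cont al be ga -> (forall s, al <= s <= be -> Om (ga s)) ->
  exists rho : posreal, forall t, al <= t <= be -> forall w, in_square (ga t) rho w -> Om w.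
Proof.
  intros Ho Hc Hin.
  destruct (lebesgue_number al be (fun t d => exists r : posreal, d <= r /\
              (forall w, in_square (ga t) (2 * r) w -> Om w) /\
              forall s, al <= s <= be -> Rabs (s - t) < d -> in_square (ga t) r (ga s))) as [d Hd].
  { intros t Ht.
    destruct (open_square_nbhd Om (ga t) Ho (Hin t Ht)) as [r Hr].
    destruct (Hc t Ht (half_posreal r)) as [d Hd].
    exists (pmin d (half_posreal r)), (half_posreal r). split; [apply pmin_r|]. split.
    - intros w Hw. apply Hr. simpl in Hw. replace (pos r) with (2 * (r / 2)) by field. exact Hw.
    - intros s Hs Hst. apply Hd; auto. pose proof (pmin_l d (half_posreal r)). lra. }
  exists d. intros t Ht w Hw.
  destruct (Hd t Ht) as [ts [dt [Hts [[r [Hr1 [Hr2 Hr3]]] [Htts Hd2]]]]]. pose proof (cond_pos dt).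
  apply Hr2. replace (2 * r) with (r + r) by ring.
  apply in_square_trans with (ga t); [apply Hr3; auto; lra | apply (in_square_mono _ d); auto; lra].
Qed.

Lemma homotopy_equicont H s0 :
  square_cont H -> 0 <= s0 <= 1 -> forall e : posreal, exists eta : posreal,
    forall s, 0 <= s <= 1 -> Rabs (s - s0) < eta -> forall t, 0 <= t <= 1 ->
      in_square (H (s0, t)) e (H (s, t)).
Proof.
  intros Hc Hs0 e.
  destruct (lebesgue_number 0 1 (fun t d => forall q, unit_square q ->
              Rabs (fst q - s0) < d -> Rabs (snd q - t) < d -> in_square (H (s0, t)) (e / 2) (H q)))
    as [d Hd].
  { intros t Ht. destruct (Hc (s0, t) (conj Hs0 Ht) (half_posreal e)) as [d Hd]. exists d. exact Hd. }
  exists d. intros s Hs Hss0 t Ht.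
  destruct (Hd t Ht) as [ts [dt [Hts [Hdt [Htts Hd2]]]]]. pose proof (cond_pos dt).
  assert (A1 : in_square (H (s0, ts)) (e / 2) (H (s, t))) by (apply Hdt; [split | |]; simpl; auto; lra).
  assert (A2 : in_square (H (s0, ts)) (e / 2) (H (s0, t))).
  { apply Hdt; [split | |]; simpl; auto; [rewrite Rminus_diag, Rabs_R0 |]; lra. }
  replace (pos e) with (e / 2 + e / 2) by field.
  exact (in_square_trans _ _ _ _ _ (in_square_sym _ _ _ A2) A1).
Qed.


(** * Continuation of primitives along paths *)

Lemma primitive_difference_const a b c1 r1 c2 r2 G1 G2 z w :
  is_primitive (in_square c1 r1) a b G1 -> is_primitive (in_square c2 r2) a b G2 ->
  in_square c1 r1 z -> in_square c2 r2 z -> in_square c1 r1 w -> in_square c2 r2 w ->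
  G1 z - G2 z = G1 w - G2 w.
Proof.
  intros P1 P2 [Z1 Z1'] [Z2 Z2'] [W1 W1'] [W2 W2'].
  destruct z as [x1 y1]; destruct w as [x2 y2]; simpl in *.
  transitivity (G1 (x2, y1) - G2 (x2, y1)).
  - apply (eq_of_derive_zero (fun t => G1 (t, y1) - G2 (t, y1))).
    intros t Ht.
    assert (S1 : in_square c1 r1 (t, y1)) by (split; simpl; [apply (Rabs_between_lt x1 x2)|]; auto).
    assert (S2 : in_square c2 r2 (t, y1)) by (split; simpl; [apply (Rabs_between_lt x1 x2)|]; auto).
    destruct (P1 _ S1) as [D1 _]. destruct (P2 _ S2) as [D2 _]. simpl in D1, D2.
    replace 0 with (a (t, y1) - a (t, y1)) by ring.
    apply (is_derive_minus (fun t => G1 (t, y1)) (fun t => G2 (t, y1))); auto.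
  - apply (eq_of_derive_zero (fun t => G1 (x2, t) - G2 (x2, t))).
    intros t Ht.
    assert (S1 : in_square c1 r1 (x2, t)) by (split; simpl; [|apply (Rabs_between_lt y1 y2)]; auto).
    assert (S2 : in_square c2 r2 (x2, t)) by (split; simpl; [|apply (Rabs_between_lt y1 y2)]; auto).
    destruct (P1 _ S1) as [_ D1]. destruct (P2 _ S2) as [_ D2]. simpl in D1, D2.
    replace 0 with (b (x2, t) - b (x2, t)) by ring.
    apply (is_derive_minus (fun t => G1 (x2, t)) (fun t => G2 (x2, t))); auto.
Qed.

Section Continuation.

Variables (Om : C -> Prop) (a b : C -> R).
Hypotheses (Ho : open Om) (Hcf : closed_form Om a b).

Definition is_chart (c : C) (r : R) (G : C -> R) : Prop :=
  0 < r /\ (forall w, in_square c r w -> Om w) /\ is_primitive (in_square c r) a b G.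

(* [phi] is the primitive continued along [ga]: near every time it agrees with a chart
   primitive evaluated on [ga], up to an additive constant. *)
Definition is_continuation (al be : R) (ga : R -> C) (phi : R -> R) : Prop :=
  forall t, al <= t <= be -> exists c r G, is_chart c r G /\
    exists eps : posreal, forall s, al <= s <= be -> Rabs (s - t) < eps ->
      in_square c r (ga s) /\ phi s - G (ga s) = phi t - G (ga t).

Lemma continuation_chart_compat al be ga phi t c r G :
  path_cont al be ga -> is_continuation al be ga phi -> al <= t <= be ->
  is_chart c r G -> in_square c r (ga t) ->
  exists eps : posreal, forall s, al <= s <= be -> Rabs (s - t) < eps ->
      in_square c r (ga s) /\ phi s - G (ga s) = phi t - G (ga t).
Proof.
  intros Hc Hl Ht Ha Hsq.
  destruct (Hl t Ht) as [c' [r' [G' [Ha' [e' He']]]]].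
  destruct (in_square_square_nbhd c r _ Hsq) as [e1 He1].
  destruct (Hc t Ht e1) as [d Hd].
  exists (pmin e' d). intros s Hs Hst.
  assert (Hs1 : Rabs (s - t) < e') by (pose proof (pmin_l e' d); lra).
  assert (Hs2 : Rabs (s - t) < d) by (pose proof (pmin_r e' d); lra).
  destruct (He' s Hs Hs1) as [Sq' Eq'].
  assert (Sq : in_square c r (ga s)) by (apply He1; apply Hd; auto).
  split; auto.
  destruct (He' t Ht (Rabs_diag_lt _ _)) as [Sqt _].
  destruct Ha as [_ [_ P]]. destruct Ha' as [_ [_ P']].
  pose proof (primitive_difference_const a b c r c' r' G G' (ga s) (ga t) P P' Sq Sq' Hsq Sqt).
  lra.
Qed.

Lemma continuation_chart_interval al be ga phi c r G u v :
  path_cont al be ga -> is_continuation al be ga phi -> is_chart c r G ->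
  al <= u -> u <= v -> v <= be -> (forall s, u <= s <= v -> in_square c r (ga s)) ->
  phi v - G (ga v) = phi u - G (ga u).
Proof.
  intros Hc Hl Ha H1 H2 H3 Hin.
  apply (locally_constant_interval (fun s => phi s - G (ga s)) u v H2); [|lra].
  intros t Ht. destruct (continuation_chart_compat al be ga phi t c r G Hc Hl ltac:(lra) Ha (Hin t Ht)) as [eps He].
  exists eps. intros s Hs Hst. apply He; auto. lra.
Qed.

Lemma continuation_chart_between al be ga phi c r G u v :
  path_cont al be ga -> is_continuation al be ga phi -> is_chart c r G ->
  al <= u <= be -> al <= v <= be -> (forall s, Rmin u v <= s <= Rmax u v -> in_square c r (ga s)) ->
  phi v - G (ga v) = phi u - G (ga u).
Proof.
  intros Hc Hl Ha Hu Hv Hin. destruct (Rle_dec u v).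
  - apply (continuation_chart_interval al be ga phi c r G u v); try lra; auto.
    intros s Hs. apply Hin. rewrite Rmin_left, Rmax_right by lra. auto.
  - symmetry. apply (continuation_chart_interval al be ga phi c r G v u); try lra; auto.
    intros s Hs. apply Hin. rewrite Rmin_right, Rmax_left by lra. auto.
Qed.

Lemma continuation_unique al be ga phi1 phi2 :
  al <= be -> path_cont al be ga -> is_continuation al be ga phi1 -> is_continuation al be ga phi2 ->
  forall s, al <= s <= be -> phi1 s - phi2 s = phi1 al - phi2 al.
Proof.
  intros Hab Hc H1 H2.
  apply (locally_constant_interval (fun s => phi1 s - phi2 s) al be Hab).
  intros t Ht. destruct (H1 t Ht) as [c [r [G [Ha [e1 He1]]]]].
  destruct (He1 t Ht (Rabs_diag_lt _ _)) as [Sqt _].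
  destruct (continuation_chart_compat al be ga phi2 t c r G Hc H2 Ht Ha Sqt) as [e2 He2].
  exists (pmin e1 e2). intros s Hs Hst.
  assert (Hs1 : Rabs (s - t) < e1) by (pose proof (pmin_l e1 e2); lra).
  assert (Hs2 : Rabs (s - t) < e2) by (pose proof (pmin_r e1 e2); lra).
  destruct (He1 s Hs Hs1) as [_ E1]. destruct (He2 s Hs Hs2) as [_ E2]. lra.
Qed.

Lemma continuation_glue al m be ga phi1 phi2 :
  al <= m <= be -> path_cont al be ga ->
  is_continuation al m ga phi1 -> is_continuation m be ga phi2 -> phi1 m = phi2 m ->
  is_continuation al be ga (fun s => if Rle_dec s m then phi1 s else phi2 s).
Proof.
  intros Hm Hc H1 H2 E t Ht.
  destruct (Rtotal_order t m) as [Hlt | [Heq | Hgt]].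
  - destruct (H1 t ltac:(lra)) as [c [r [G [Ha [e He]]]]].
    assert (Hp : 0 < m - t) by lra.
    exists c, r, G. split; auto. exists (pmin e (mkposreal _ Hp)). intros s Hs Hst.
    assert (Hs1 : Rabs (s - t) < e) by (pose proof (pmin_l e (mkposreal _ Hp)); lra).
    assert (Hs2 : Rabs (s - t) < m - t) by (pose proof (pmin_r e (mkposreal _ Hp)); simpl in *; lra).
    assert (s < m) by (unfold Rabs in Hs2; destruct Rcase_abs in Hs2; lra).
    destruct (Rle_dec s m); [|lra]. destruct (Rle_dec t m); [|lra].
    apply He; auto. lra.
  - subst t.
    destruct (H2 m ltac:(lra)) as [c [r [G [Ha [e2 He2]]]]].
    destruct (He2 m ltac:(lra) (Rabs_diag_lt _ _)) as [Sqm _].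
    destruct (continuation_chart_compat al m ga phi1 m c r G
                (path_cont_sub al be al m ga ltac:(lra) ltac:(lra) Hc) H1 ltac:(lra) Ha Sqm) as [e1 He1].
    exists c, r, G. split; auto. exists (pmin e1 e2). intros s Hs Hst.
    assert (Hs1 : Rabs (s - m) < e1) by (pose proof (pmin_l e1 e2); lra).
    assert (Hs2 : Rabs (s - m) < e2) by (pose proof (pmin_r e1 e2); lra).
    destruct (Rle_dec m m); [|lra].
    destruct (Rle_dec s m).
    + apply He1; auto. lra.
    + rewrite E. apply He2; auto. lra.
  - destruct (H2 t ltac:(lra)) as [c [r [G [Ha [e He]]]]].
    assert (Hp : 0 < t - m) by lra.
    exists c, r, G. split; auto. exists (pmin e (mkposreal _ Hp)). intros s Hs Hst.
    assert (Hs1 : Rabs (s - t) < e) by (pose proof (pmin_l e (mkposreal _ Hp)); lra).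
    assert (Hs2 : Rabs (s - t) < t - m) by (pose proof (pmin_r e (mkposreal _ Hp)); simpl in *; lra).
    assert (s > m) by (unfold Rabs in Hs2; destruct Rcase_abs in Hs2; lra).
    destruct (Rle_dec s m); [lra|]. destruct (Rle_dec t m); [lra|].
    apply He; auto. lra.
Qed.

Lemma chart_continuation u v ga c r G k :
  is_chart c r G -> (forall s, u <= s <= v -> in_square c r (ga s)) ->
  is_continuation u v ga (fun s => G (ga s) + k).
Proof.
  intros Ha Hin t Ht. exists c, r, G. split; auto. exists (mkposreal 1 Rlt_0_1).
  intros s Hs _. split; auto. ring.
Qed.

Lemma continuation_ext al be ga ga' phi phi' :
  (forall s, al <= s <= be -> ga s = ga' s) -> (forall s, al <= s <= be -> phi s = phi' s) ->
  is_continuation al be ga phi -> is_continuation al be ga' phi'.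
Proof.
  intros E1 E2 H t Ht. destruct (H t Ht) as [c [r [G [Ha [e He]]]]].
  exists c, r, G. split; auto. exists e. intros s Hs Hst.
  rewrite <- !E1, <- !E2; auto.
Qed.

Lemma continuation_reparam al be al' be' ga phi sig :
  reparam al be al' be' sig -> is_continuation al be ga phi ->
  is_continuation al' be' (fun t => ga (sig t)) (fun t => phi (sig t)).
Proof.
  intros [Hin Hc] H t Ht. destruct (H (sig t) (Hin t Ht)) as [c [r [G [Ha [e He]]]]].
  exists c, r, G. split; auto. destruct (Hc t Ht e) as [d Hd]. exists d.
  intros s Hs Hst. apply He; auto.
Qed.

Lemma continuation_add_const al be ga phi k :
  is_continuation al be ga phi -> is_continuation al be ga (fun s => phi s + k).
Proof.
  intros H t Ht. destruct (H t Ht) as [c [r [G [Ha [e He]]]]].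
  exists c, r, G. split; auto. exists e. intros s Hs Hst.
  destruct (He s Hs Hst) as [S E]. split; auto. lra.
Qed.

Lemma continuation_concat g1 g2 p1 p2 :
  is_path Om g1 -> is_path Om g2 -> g1 1 = g2 0 ->
  is_continuation 0 1 g1 p1 -> is_continuation 0 1 g2 p2 ->
  exists p, is_continuation 0 1 (path_concat g1 g2) p /\ p 0 = p1 0 /\ p 1 = p2 1 + (p1 1 - p2 0).
Proof.
  intros P1 P2 E L1 L2.
  pose proof (path_concat_is_path Om g1 g2 P1 P2 E) as [Cc _].
  exists (fun t => if Rle_dec t (1/2) then p1 (2 * t) else p2 (2 * t - 1) + (p1 1 - p2 0)).
  split; [|split].
  - apply continuation_glue; [lra | exact Cc | | | ].
    + apply (continuation_ext 0 (1/2) (fun t => g1 (2 * t + 0)) _ (fun t => p1 (2 * t + 0))).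
      * intros s Hs. unfold path_concat. destruct (Rle_dec s (1/2)); [|lra]. f_equal; ring.
      * intros s Hs. f_equal; ring.
      * apply (continuation_reparam 0 1); auto. apply reparam_affine. intros; lra.
    + apply continuation_add_const.
      apply (continuation_ext (1/2) 1 (fun t => g2 (2 * t + -1)) _ (fun t => p2 (2 * t + -1))).
      * intros s Hs. unfold path_concat. destruct (Rle_dec s (1/2)).
        -- assert (s = 1/2) by lra. subst s. replace (2 * (1/2) + -1) with 0 by field.
           replace (2 * (1/2)) with 1 by field. auto.
        -- f_equal; ring.
      * intros s Hs. f_equal; ring.
      * apply (continuation_reparam 0 1); auto. apply reparam_affine. intros; lra.
    + cbv beta. replace (2 * (1/2)) with 1 by field. rewrite Rminus_diag. ring.
  - destruct (Rle_dec 0 (1/2)); [|lra]. f_equal; ring.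
  - destruct (Rle_dec 1 (1/2)); [lra|]. replace (2 * 1 - 1) with 1 by ring. reflexivity.
Qed.

Lemma continuation_rev g p :
  is_continuation 0 1 g p -> is_continuation 0 1 (path_rev g) (fun t => p (1 - t)).
Proof.
  intros L. apply (continuation_ext 0 1 (fun t => g (-1 * t + 1)) _ (fun t => p (-1 * t + 1))).
  - intros s Hs. unfold path_rev. f_equal; try ring.
  - intros s Hs. f_equal; try ring.
  - apply (continuation_reparam 0 1); auto. apply reparam_affine. intros; lra.
Qed.

Lemma chart_exists c r : 0 < r -> (forall w, in_square c r w -> Om w) ->
  exists G, is_chart c r G.
Proof.
  intros Hr Hin. exists (square_potential a b c). split; [exact Hr|]. split; [exact Hin|].
  exact (square_primitive a b c r (closed_form_subset _ _ a b Hin Hcf)).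
Qed.

Lemma chart_family (r : posreal) :
  exists Gc : C -> C -> R, forall c, (forall w, in_square c r w -> Om w) -> is_chart c r (Gc c).
Proof.
  apply (choice (fun c G => (forall w, in_square c r w -> Om w) -> is_chart c r G)).
  intros c. destruct (classic (forall w, in_square c r w -> Om w)) as [Hi|Hi].
  - destruct (chart_exists c r (cond_pos r) Hi) as [G HG]. exists G. auto.
  - exists (fun _ => 0). intros Hi'. contradiction.
Qed.

Lemma continuation_extend_chart al T' T ga phi c r G :
  al <= T' <= T -> path_cont al T ga -> is_continuation al T' ga phi ->
  is_chart c r G -> (forall s, T' <= s <= T -> in_square c r (ga s)) ->
  exists phi', is_continuation al T ga phi' /\ phi' al = phi al.
Proof.
  intros HT Hc Hphi HG Hin.
  exists (fun s => if Rle_dec s T' then phi s else G (ga s) + (phi T' - G (ga T'))). split.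
  - apply continuation_glue; auto.
    + exact (chart_continuation T' T ga c r G _ HG Hin).
    + destruct (Rle_dec T' T'); [ring | lra].
  - destruct (Rle_dec al T'); [reflexivity | lra].
Qed.

(* The chart radii along [ga] have a positive Lebesgue number [d]; advance by steps of [d]. *)
Lemma continuation_exists al be ga :
  al <= be -> path_cont al be ga -> (forall s, al <= s <= be -> Om (ga s)) ->
  exists phi, is_continuation al be ga phi /\ phi al = 0.
Proof.
  intros Hab Hc Hin.
  destruct (lebesgue_number al be (fun t d => exists r G, is_chart (ga t) r G /\
              forall s, al <= s <= be -> Rabs (s - t) < d -> in_square (ga t) r (ga s))) as [d Hd].
  { intros t Ht.
    destruct (open_square_nbhd Om (ga t) Ho (Hin t Ht)) as [r Hr].
    destruct (chart_exists (ga t) r (cond_pos r) Hr) as [G HG].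
    destruct (Hc t Ht r) as [d Hd]. exists d, r, G. split; auto. }
  assert (Claim : forall (n : nat) T, al <= T <= be -> T <= al + INR n * d ->
            exists phi, is_continuation al T ga phi /\ phi al = 0).
  { induction n as [|n IH]; intros T HT HTn.
    - simpl in HTn. assert (T = al) by lra. subst T.
      destruct (open_square_nbhd Om (ga al) Ho (Hin al ltac:(lra))) as [r Hr].
      destruct (chart_exists (ga al) r (cond_pos r) Hr) as [G HG].
      exists (fun _ => 0). split; [|reflexivity].
      intros t Ht. assert (t = al) by lra. subst t.
      exists (ga al), r, G. split; [exact HG|]. exists (mkposreal 1 Rlt_0_1). intros s Hs' _.
      assert (s = al) by lra. subst s. split; [apply in_square_center, cond_pos | ring].
    - destruct (Rle_dec T (al + INR n * d)) as [Hle|Hgt]; [apply IH; auto|].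
      set (T' := al + INR n * d).
      assert (HT' : al <= T' < T).
      { unfold T'. pose proof (pos_INR n). pose proof (cond_pos d). split; [nra|lra]. }
      rewrite S_INR in HTn.
      destruct (IH T' ltac:(lra) ltac:(unfold T'; lra)) as [phi [Hphi Hphi0]].
      destruct (Hd T' ltac:(lra)) as [ts [dt [Hts [[r [G [Ha Hsq]]] [Hts1 Hts2]]]]].
      rewrite <- Hphi0.
      apply (continuation_extend_chart al T' T ga phi (ga ts) r G); [lra | | exact Hphi | exact Ha |].
      + apply (path_cont_sub al be); auto; lra.
      + intros s Hs. apply Hsq; [lra|].
        replace (s - ts) with ((s - T') + (T' - ts)) by ring.
        eapply Rle_lt_trans; [apply Rabs_triang|].
        assert (T - T' <= d) by (unfold T'; lra). rewrite (Rabs_pos_eq (s - T')) by lra. lra. }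
  destruct (INR_unbounded ((be - al) / d)) as [n Hn].
  apply (Claim n be); [lra|].
  assert (INR n * d > be - al).
  { apply Rmult_lt_reg_r with (/ d). apply Rinv_0_lt_compat, cond_pos.
    rewrite Rmult_assoc, Rinv_r by (apply Rgt_not_eq, cond_pos). unfold Rdiv in Hn. lra. }
  lra.
Qed.

Lemma continuation_constant_path ga phi c :
  (forall t, 0 <= t <= 1 -> ga t = c) -> is_continuation 0 1 ga phi -> phi 1 = phi 0.
Proof.
  intros Hga Hphi.
  destruct (Hphi 0 ltac:(lra)) as [c' [r [G [Ha [e He]]]]].
  destruct (He 0 ltac:(lra) (Rabs_diag_lt 0 e)) as [Sq0 _].
  assert (Hcst : forall s, 0 <= s <= 1 -> in_square c' r (ga s))
    by (intros s Hs; rewrite Hga, <- (Hga 0); auto; lra).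
  pose proof (continuation_chart_interval 0 1 ga phi c' r G 0 1) as E.
  rewrite (Hga 1), (Hga 0) in E by lra.
  enough (phi 1 - G c = phi 0 - G c) by lra.
  apply E; auto; try lra.
  intros t Ht e'. exists (mkposreal 1 Rlt_0_1). intros s Hs _. rewrite !Hga by auto.
  apply in_square_center, cond_pos.
Qed.

(* Uniformly close paths: the difference of the increments of their continuations is read off
   a single chart at each endpoint. *)
Lemma continuation_close_paths g0 gs p0 ps (rho : posreal) Gc :
  path_cont 0 1 g0 -> path_cont 0 1 gs ->
  is_continuation 0 1 g0 p0 -> is_continuation 0 1 gs ps ->
  (forall t, 0 <= t <= 1 -> is_chart (g0 t) rho (Gc (g0 t))) ->
  (forall t, 0 <= t <= 1 -> in_square (g0 t) (rho / 2) (gs t)) ->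
  (ps 1 - ps 0) - (p0 1 - p0 0) =
    (Gc (g0 1) (gs 1) - Gc (g0 1) (g0 1)) - (Gc (g0 0) (gs 0) - Gc (g0 0) (g0 0)).
Proof.
  intros C0 Cs L0 Ls Hch Hclose.
  set (psi := fun t => (ps t - ps 0) - (p0 t - p0 0) - (Gc (g0 t) (gs t) - Gc (g0 t) (g0 t))).
  enough (Hpsi : forall t, 0 <= t <= 1 -> psi t = psi 0) by (pose proof (Hpsi 1 ltac:(lra)); unfold psi in *; lra).
  apply locally_constant_interval; [lra|]. intros t Ht.
  destruct (C0 t Ht (half_posreal rho)) as [eps Heps].
  exists eps. intros t' Ht' Htt.
  set (c := g0 t). set (G := Gc c).
  assert (Hb : forall u, Rmin t t' <= u <= Rmax t t' -> in_square c rho (gs u) /\ in_square c rho (g0 u)).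
  { intros u Hu. pose proof (Rabs_between t t' u Hu) as Hut.
    assert (Hu01 : 0 <= u <= 1) by (unfold Rmin, Rmax in Hu; destruct (Rle_dec t t'); lra).
    assert (S1 : in_square c (rho / 2) (g0 u)) by (apply Heps; auto; lra).
    replace (pos rho) with (rho / 2 + rho / 2) by field. split.
    - apply in_square_trans with (g0 u); auto.
    - apply (in_square_mono _ (rho / 2)); [pose proof (cond_pos rho); lra | exact S1]. }
  assert (Hc : is_chart c rho G) by (apply Hch; auto).
  assert (E1 : ps t' - G (gs t') = ps t - G (gs t))
    by (apply (continuation_chart_between 0 1 gs ps c rho G t t'); auto; intros u Hu; apply Hb; auto).
  assert (E2 : p0 t' - G (g0 t') = p0 t - G (g0 t))
    by (apply (continuation_chart_between 0 1 g0 p0 c rho G t t'); auto; intros u Hu; apply Hb; auto).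
  destruct (Hb t') as [B1 B2]; [split; [apply Rmin_r | apply Rmax_r]|].
  assert (B3 : in_square (g0 t') rho (gs t')).
  { apply (in_square_mono _ (rho / 2)); [pose proof (cond_pos rho); lra | apply Hclose, Ht']. }
  destruct Hc as [_ [_ Pc]]. destruct (Hch t' Ht') as [_ [_ Pc']].
  pose proof (primitive_difference_const a b c rho (g0 t') rho G (Gc (g0 t')) (gs t') (g0 t')
                Pc Pc' B1 B3 B2 (in_square_center _ _ (cond_pos rho))) as E3.
  unfold psi, G, c in *. lra.
Qed.

Lemma continuation_null_homotopic_loop ga phi H :
  square_cont H -> (forall p, unit_square p -> Om (H p)) ->
  (forall t, 0 <= t <= 1 -> H (0, t) = ga t) ->
  (forall t, 0 <= t <= 1 -> H (1, t) = H (1, 0)) ->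
  (forall s, 0 <= s <= 1 -> H (s, 0) = H (s, 1)) ->
  is_continuation 0 1 ga phi -> phi 1 = phi 0.
Proof.
  intros Hc HOm H0 H1 Hper Hphi.
  assert (Hrow : forall s, 0 <= s <= 1 -> path_cont 0 1 (fun t => H (s, t)))
    by (intros s Hs; apply square_cont_row; auto).
  assert (HrowOm : forall s, 0 <= s <= 1 -> forall t, 0 <= t <= 1 -> Om (H (s, t)))
    by (intros s Hs t Ht; apply HOm; split; auto).
  destruct (choice (fun s f => 0 <= s <= 1 -> is_continuation 0 1 (fun t => H (s, t)) f))
    as [Phi HPhi].
  { intros s. destruct (Rle_dec 0 s) as [A1|A1]; [destruct (Rle_dec s 1) as [A2|A2]|].
    - destruct (continuation_exists 0 1 (fun t => H (s, t)) ltac:(lra) (Hrow s (conj A1 A2))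
                 (HrowOm s (conj A1 A2))) as [f [Hf _]].
      exists f. auto.
    - exists (fun _ => 0). intros; lra.
    - exists (fun _ => 0). intros; lra. }
  set (m := fun s => Phi s 1 - Phi s 0).
  assert (Hm : forall s, 0 <= s <= 1 -> m s = m 0).
  { apply locally_constant_interval; [lra|]. intros s0 Hs0.
    destruct (path_uniform_radius Om 0 1 _ Ho (Hrow s0 Hs0) (HrowOm s0 Hs0)) as [rho Hrho].
    destruct (chart_family rho) as [Gc HGc].
    destruct (homotopy_equicont H s0 Hc Hs0 (half_posreal rho)) as [eta Heta].
    exists eta. intros s Hs Hss0.
    pose proof (continuation_close_paths _ _ _ _ rho Gc (Hrow s0 Hs0) (Hrow s Hs) (HPhi s0 Hs0) (HPhi s Hs)
                  (fun t Ht => HGc _ (Hrho t Ht)) (fun t Ht => Heta s Hs Hss0 t Ht)) as E.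
    cbv beta in E. rewrite <- (Hper s), <- (Hper s0) in E by lra.
    unfold m. lra. }
  assert (Hm1 : m 1 = 0).
  { unfold m. pose proof (continuation_constant_path _ _ (H (1, 0)) (H1) (HPhi 1 ltac:(lra))). lra. }
  assert (Hm0 : m 0 = phi 1 - phi 0).
  { assert (L : is_continuation 0 1 (fun t => H (0, t)) phi).
    { apply (continuation_ext 0 1 ga _ phi phi); auto. intros s Hs. symmetry. auto. }
    pose proof (continuation_unique 0 1 (fun t => H (0, t)) (Phi 0) phi ltac:(lra) (Hrow 0 ltac:(lra))
                  (HPhi 0 ltac:(lra)) L 1 ltac:(lra)).
    unfold m. lra. }
  pose proof (Hm 1 ltac:(lra)). lra.
Qed.

Lemma continuation_path_independent z0 z g1 g2 p1 p2 :
  simply_connected_domain Om ->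
  is_path Om g1 -> is_path Om g2 -> g1 0 = z0 -> g2 0 = z0 -> g1 1 = z -> g2 1 = z ->
  is_continuation 0 1 g1 p1 -> is_continuation 0 1 g2 p2 -> p1 0 = 0 -> p2 0 = 0 -> p1 1 = p2 1.
Proof.
  intros [_ Hsc] P1 P2 E1 E2 F1 F2 L1 L2 Z1 Z2.
  pose proof (path_rev_is_path Om g2 P2) as P2'.
  assert (E : g1 1 = path_rev g2 0) by (unfold path_rev; rewrite Rminus_0_r; congruence).
  pose proof (path_concat_is_path Om g1 (path_rev g2) P1 P2' E) as [Cc Oc].
  destruct (continuation_concat g1 (path_rev g2) _ _ P1 P2' E L1 (continuation_rev g2 p2 L2))
    as [p [L [Lp0 Lp1]]].
  destruct (Hsc (path_concat g1 (path_rev g2)) (continuous_on_of_path_cont _ Cc) Oc)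
    as [H [HH1 [HH2 [HH3 [HH4 HH5]]]]].
  { rewrite path_concat_0, path_concat_1. unfold path_rev. rewrite Rminus_diag. congruence. }
  pose proof (continuation_null_homotopic_loop _ _ H (square_cont_of_continuous_on H HH1)
                HH2 HH3 HH4 HH5 L) as Z.
  rewrite Lp1, Rminus_diag, Rminus_0_r in Z. lra.
Qed.

Definition potential_value (z0 z : C) (v : R) : Prop :=
  exists g p, is_path Om g /\ g 0 = z0 /\ g 1 = z /\ is_continuation 0 1 g p /\ p 0 = 0 /\ p 1 = v.

Lemma potential_value_exists z0 z :
  is_domain Om -> Om z0 -> Om z -> exists v, potential_value z0 z v.
Proof.
  intros [_ [_ Hpc]] Hz0 Hz. destruct (Hpc z0 z Hz0 Hz) as [g [Hg1 [Hg2 [Hg3 Hg4]]]].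
  assert (Pg : is_path Om g) by (split; [apply path_cont_of_continuous_on; auto | auto]).
  destruct (continuation_exists 0 1 g ltac:(lra) (proj1 Pg) (proj2 Pg)) as [p [Hp Hp0]].
  exists (p 1), g, p. exact (conj Pg (conj Hg3 (conj Hg4 (conj Hp (conj Hp0 eq_refl))))).
Qed.

Lemma potential_value_unique z0 z v1 v2 : simply_connected_domain Om ->
  potential_value z0 z v1 -> potential_value z0 z v2 -> v1 = v2.
Proof.
  intros SC [g1 [p1 [P1 [E1 [F1 [L1 [Z1 V1]]]]]]] [g2 [p2 [P2 [E2 [F2 [L2 [Z2 V2]]]]]]].
  subst v1 v2. exact (continuation_path_independent z0 z g1 g2 p1 p2 SC P1 P2 E1 E2 F1 F2 L1 L2 Z1 Z2).
Qed.

(* Inside a chart, continue along the segment from [z] to [w]. *)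
Lemma potential_value_chart z0 z w v r G : potential_value z0 z v ->
  is_chart z r G -> in_square z r w -> potential_value z0 w (v + G w - G z).
Proof.
  intros [g [p [Pg [G0 [G1 [Lp [P0 P1]]]]]]] HG Hw.
  assert (Hin : forall s, 0 <= s <= 1 -> in_square z r (segment z w s))
    by (intros; apply segment_in_square; auto).
  assert (Ps : is_path Om (segment z w)).
  { split; [apply segment_path_cont | intros s Hs; apply (proj1 (proj2 HG)), Hin, Hs]. }
  assert (E : g 1 = segment z w 0) by (rewrite segment_0; auto).
  destruct (continuation_concat g (segment z w) p _ Pg Ps E Lp
              (chart_continuation 0 1 _ z r G (v - G z) HG Hin)) as [q [Lq [Q0 Q1]]].
  exists (path_concat g (segment z w)), q.
  split; [exact (path_concat_is_path Om _ _ Pg Ps E)|].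
  split; [rewrite path_concat_0; exact G0|].
  split; [rewrite path_concat_1; apply segment_1|].
  split; [exact Lq|]. split; [congruence|].
  rewrite Q1, segment_0, segment_1, P1. ring.
Qed.

(* Gluing the continuations is well defined because the domain is simply connected. *)
Lemma poincare_lemma : simply_connected_domain Om -> exists Q, is_primitive Om a b Q.
Proof.
  intros SC. pose proof SC as [[[z0 Hz0] _] _].
  destruct (choice (fun z v => Om z -> potential_value z0 z v)) as [Q HQ].
  { intros z. destruct (classic (Om z)) as [Hz|Hz].
    - destruct (potential_value_exists z0 z (proj1 SC) Hz0 Hz) as [v Hv]. exists v. auto.
    - exists 0. contradiction. }
  exists Q. intros z Hz.
  destruct (open_square_nbhd Om z Ho Hz) as [r Hr].
  destruct (chart_exists z r (cond_pos r) Hr) as [G HG].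
  assert (Hloc : forall w, in_square z r w -> G w + (Q z - G z) = Q w).
  { intros w Hw. apply (potential_value_unique z0 w); [exact SC | | apply HQ, Hr, Hw].
    replace (G w + (Q z - G z)) with (Q z + G w - G z) by ring.
    exact (potential_value_chart z0 z w _ r G (HQ z Hz) HG Hw). }
  assert (Hl : locally z (fun w => G w + (Q z - G z) = Q w)).
  { eapply filter_imp; [exact Hloc|]. exact (in_square_locally z r z (in_square_center z r (cond_pos r))). }
  destruct HG as [_ [_ PG]]. destruct (PG z (in_square_center z r (cond_pos r))) as [Du Dv].
  split.
  - apply (is_derive_ext_loc (fun t => G (t, snd z) + (Q z - G z))); [exact (locally_hline z _ Hl)|].
    rewrite <- (Rplus_0_r (a z)).
    exact (is_derive_plus _ _ _ _ _ Du (is_derive_const (K:=R_AbsRing) (V:=R_NormedModule) _ _)).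
  - apply (is_derive_ext_loc (fun t => G (fst z, t) + (Q z - G z))); [exact (locally_vline z _ Hl)|].
    rewrite <- (Rplus_0_r (b z)).
    exact (is_derive_plus _ _ _ _ _ Dv (is_derive_const (K:=R_AbsRing) (V:=R_NormedModule) _ _)).
Qed.

End Continuation.

Definition C1_on (Om : C -> Prop) (f : C -> R) : Prop :=
  forall z, Om z -> ex_derive (fun t => f (t, snd z)) (fst z) /\
    ex_derive (fun t => f (fst z, t)) (snd z) /\
    continuous f z /\ continuous (pu f) z /\ continuous (pv f) z.

Definition C2_on (Om : C -> Prop) (f : C -> R) : Prop :=
  C1_on Om f /\ C1_on Om (pu f) /\ C1_on Om (pv f).

Lemma C2_on_R_iff Om f : C2_on_R Om f <-> C2_on Om f.
Proof.
  split.
  - intros H. split; [|split]; intros z Hz;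
      destruct (H z Hz) as [A1 [A2 [A3 [A4 [A5 [A6 [A7 [A8 [A9 [A10 [A11 [A12 A13]]]]]]]]]]]];
      repeat split; auto.
  - intros [H1 [H2 H3]] z Hz. destruct (H1 z Hz) as [A1 [A2 [A3 [A4 A5]]]].
    destruct (H2 z Hz) as [B1 [B2 [B3 [B4 B5]]]]. destruct (H3 z Hz) as [C1 [C2 [C3 [C4 C5]]]].
    repeat split; auto.
Qed.

Lemma continuous_ext_open (Om : C -> Prop) (f g : C -> R) z :
  open Om -> Om z -> (forall w, Om w -> f w = g w) -> continuous f z -> continuous g z.
Proof.
  intros Ho Hz E. apply continuous_ext_loc. eapply filter_imp; [|exact (Ho z Hz)].
  intros w Hw. exact (E w Hw).
Qed.

Lemma continuous_Rmult (f g : C -> R) z :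
  continuous f z -> continuous g z -> continuous (fun w => f w * g w) z.
Proof. apply (continuous_mult f g). Qed.

Lemma continuous_Rplus (f g : C -> R) z :
  continuous f z -> continuous g z -> continuous (fun w => f w + g w) z.
Proof. apply (continuous_plus f g). Qed.

Lemma continuous_Rinv_comp (f : C -> R) z :
  continuous f z -> f z <> 0 -> continuous (fun w => / f w) z.
Proof.
  intros Hc Hn. apply (continuous_comp f (fun x => / x)); auto.
  apply (ex_derive_continuous (K:=R_AbsRing) (V:=R_NormedModule)).
  apply (ex_derive_inv (fun x => x)); auto. apply (ex_derive_id (K:=R_AbsRing)).
Qed.

Lemma pu_ext_loc (f g : C -> R) z : locally z (fun w => f w = g w) -> pu f z = pu g z.
Proof. intros Hl. unfold pu. apply Derive_ext_loc, (locally_hline z (fun w => f w = g w)), Hl. Qed.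

Lemma pv_ext_loc (f g : C -> R) z : locally z (fun w => f w = g w) -> pv f z = pv g z.
Proof. intros Hl. unfold pv. apply Derive_ext_loc, (locally_vline z (fun w => f w = g w)), Hl. Qed.

Lemma pu_const c z : pu (fun _ => c) z = 0.
Proof. unfold pu. apply Derive_const. Qed.

Lemma pv_const c z : pv (fun _ => c) z = 0.
Proof. unfold pv. apply Derive_const. Qed.

Lemma pu_scal k f z : pu (fun w => k * f w) z = k * pu f z.
Proof. unfold pu. apply Derive_scal. Qed.

Lemma pv_scal k f z : pv (fun w => k * f w) z = k * pv f z.
Proof. unfold pv. apply Derive_scal. Qed.

Lemma pu_mult f g z : ex_derive (fun t => f (t, snd z)) (fst z) -> ex_derive (fun t => g (t, snd z)) (fst z) ->
  pu (fun w => f w * g w) z = pu f z * g z + f z * pu g z.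
Proof.
  intros H1 H2. unfold pu. rewrite (Derive_mult (fun t => f (t, snd z)) (fun t => g (t, snd z))); auto.
  destruct z; reflexivity.
Qed.

Lemma pv_mult f g z : ex_derive (fun t => f (fst z, t)) (snd z) -> ex_derive (fun t => g (fst z, t)) (snd z) ->
  pv (fun w => f w * g w) z = pv f z * g z + f z * pv g z.
Proof.
  intros H1 H2. unfold pv. rewrite (Derive_mult (fun t => f (fst z, t)) (fun t => g (fst z, t))); auto.
  destruct z; reflexivity.
Qed.

Lemma pu_plus f g z : ex_derive (fun t => f (t, snd z)) (fst z) -> ex_derive (fun t => g (t, snd z)) (fst z) ->
  pu (fun w => f w + g w) z = pu f z + pu g z.
Proof.
  intros H1 H2. unfold pu. rewrite (Derive_plus (fun t => f (t, snd z)) (fun t => g (t, snd z))); auto.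
Qed.

Lemma pv_plus f g z : ex_derive (fun t => f (fst z, t)) (snd z) -> ex_derive (fun t => g (fst z, t)) (snd z) ->
  pv (fun w => f w + g w) z = pv f z + pv g z.
Proof.
  intros H1 H2. unfold pv. rewrite (Derive_plus (fun t => f (fst z, t)) (fun t => g (fst z, t))); auto.
Qed.

Lemma pu_minus f g z : ex_derive (fun t => f (t, snd z)) (fst z) -> ex_derive (fun t => g (t, snd z)) (fst z) ->
  pu (fun w => f w - g w) z = pu f z - pu g z.
Proof. intros H1 H2. unfold pu. rewrite (Derive_minus (fun t => f (t, snd z)) (fun t => g (t, snd z))); auto. Qed.

Lemma pv_minus f g z : ex_derive (fun t => f (fst z, t)) (snd z) -> ex_derive (fun t => g (fst z, t)) (snd z) ->
  pv (fun w => f w - g w) z = pv f z - pv g z.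
Proof. intros H1 H2. unfold pv. rewrite (Derive_minus (fun t => f (fst z, t)) (fun t => g (fst z, t))); auto. Qed.

Lemma pu_inv f z : ex_derive (fun t => f (t, snd z)) (fst z) -> f z <> 0 ->
  pu (fun w => / f w) z = - pu f z * (/ f z * / f z).
Proof.
  intros H1 H2. unfold pu. rewrite (Derive_inv (fun t => f (t, snd z))); auto.
  destruct z; simpl. field. auto. destruct z; auto.
Qed.

Lemma pv_inv f z : ex_derive (fun t => f (fst z, t)) (snd z) -> f z <> 0 ->
  pv (fun w => / f w) z = - pv f z * (/ f z * / f z).
Proof.
  intros H1 H2. unfold pv. rewrite (Derive_inv (fun t => f (fst z, t))); auto.
  destruct z; simpl. field. auto. destruct z; auto.
Qed.

Lemma C1_on_ext Om f g : open Om -> (forall w, Om w -> f w = g w) -> C1_on Om f -> C1_on Om g.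
Proof.
  intros Ho E H z Hz. destruct (H z Hz) as [Du [Dv [Cf [Cu Cv]]]].
  assert (L : forall z, Om z -> locally z (fun w => f w = g w)) by (intros; apply (locally_of_open Om); auto).
  repeat split.
  - apply (ex_derive_ext_loc (fun t => f (t, snd z))); auto.
    exact (locally_hline z (fun w => f w = g w) (L z Hz)).
  - apply (ex_derive_ext_loc (fun t => f (fst z, t))); auto.
    exact (locally_vline z (fun w => f w = g w) (L z Hz)).
  - apply (continuous_ext_open Om f); auto.
  - apply (continuous_ext_open Om (pu f)); auto. intros w Hw. apply pu_ext_loc, L, Hw.
  - apply (continuous_ext_open Om (pv f)); auto. intros w Hw. apply pv_ext_loc, L, Hw.
Qed.

Lemma C1_on_const Om c : open Om -> C1_on Om (fun _ => c).
Proof.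
  intros Ho z Hz. repeat split; [apply ex_derive_const | apply ex_derive_const | apply continuous_const | |].
  - apply (continuous_ext_open Om (fun _ => 0)); auto; [intros; rewrite pu_const; auto | apply continuous_const].
  - apply (continuous_ext_open Om (fun _ => 0)); auto; [intros; rewrite pv_const; auto | apply continuous_const].
Qed.

Lemma C1_on_plus Om f g : open Om -> C1_on Om f -> C1_on Om g -> C1_on Om (fun w => f w + g w).
Proof.
  intros Ho Hf Hg z Hz.
  destruct (Hf z Hz) as [F1 [F2 [F3 [F4 F5]]]]. destruct (Hg z Hz) as [G1 [G2 [G3 [G4 G5]]]].
  repeat split.
  - apply (ex_derive_plus (fun t => f (t, snd z)) (fun t => g (t, snd z))); auto.
  - apply (ex_derive_plus (fun t => f (fst z, t)) (fun t => g (fst z, t))); auto.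
  - apply continuous_Rplus; auto.
  - apply (continuous_ext_open Om (fun w => pu f w + pu g w)); auto; [|apply continuous_Rplus; auto].
    intros w Hw. destruct (Hf w Hw) as [? _]. destruct (Hg w Hw) as [? _]. symmetry. apply pu_plus; auto.
  - apply (continuous_ext_open Om (fun w => pv f w + pv g w)); auto; [|apply continuous_Rplus; auto].
    intros w Hw. destruct (Hf w Hw) as [_ [? _]]. destruct (Hg w Hw) as [_ [? _]]. symmetry. apply pv_plus; auto.
Qed.

Lemma C1_on_mult Om f g : open Om -> C1_on Om f -> C1_on Om g -> C1_on Om (fun w => f w * g w).
Proof.
  intros Ho Hf Hg z Hz.
  destruct (Hf z Hz) as [F1 [F2 [F3 [F4 F5]]]]. destruct (Hg z Hz) as [G1 [G2 [G3 [G4 G5]]]].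
  repeat split.
  - apply (ex_derive_mult (fun t => f (t, snd z)) (fun t => g (t, snd z))); auto.
  - apply (ex_derive_mult (fun t => f (fst z, t)) (fun t => g (fst z, t))); auto.
  - apply continuous_Rmult; auto.
  - apply (continuous_ext_open Om (fun w => pu f w * g w + f w * pu g w)); auto;
      [|apply continuous_Rplus; apply continuous_Rmult; auto].
    intros w Hw. destruct (Hf w Hw) as [? _]. destruct (Hg w Hw) as [? _]. symmetry. apply pu_mult; auto.
  - apply (continuous_ext_open Om (fun w => pv f w * g w + f w * pv g w)); auto;
      [|apply continuous_Rplus; apply continuous_Rmult; auto].
    intros w Hw. destruct (Hf w Hw) as [_ [? _]]. destruct (Hg w Hw) as [_ [? _]]. symmetry. apply pv_mult; auto.
Qed.

Lemma C1_on_inv Om f : open Om -> (forall w, Om w -> f w <> 0) -> C1_on Om f -> C1_on Om (fun w => / f w).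
Proof.
  intros Ho Hn Hf z Hz.
  destruct (Hf z Hz) as [F1 [F2 [F3 [F4 F5]]]]. pose proof (Hn z Hz) as Hz0.
  assert (Cinv2 : continuous (fun w => / f w * / f w) z)
    by (apply continuous_Rmult; apply continuous_Rinv_comp; auto).
  repeat split.
  - apply (ex_derive_inv (fun t => f (t, snd z))); auto. destruct z; auto.
  - apply (ex_derive_inv (fun t => f (fst z, t))); auto. destruct z; auto.
  - apply continuous_Rinv_comp; auto.
  - apply (continuous_ext_open Om (fun w => (-1 * pu f w) * (/ f w * / f w))); auto.
    + intros w Hw. destruct (Hf w Hw) as [? _]. rewrite pu_inv by auto. ring.
    + apply continuous_Rmult; auto. apply continuous_Rmult; auto. apply continuous_const.
  - apply (continuous_ext_open Om (fun w => (-1 * pv f w) * (/ f w * / f w))); auto.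
    + intros w Hw. destruct (Hf w Hw) as [_ [? _]]. rewrite pv_inv by auto. ring.
    + apply continuous_Rmult; auto. apply continuous_Rmult; auto. apply continuous_const.
Qed.

Lemma C2_on_ext Om f g : open Om -> (forall w, Om w -> f w = g w) -> C2_on Om f -> C2_on Om g.
Proof.
  intros Ho E [H1 [H2 H3]]. split; [|split].
  - apply (C1_on_ext Om f); auto.
  - apply (C1_on_ext Om (pu f)); auto. intros w Hw. apply pu_ext_loc. apply (locally_of_open Om); auto.
  - apply (C1_on_ext Om (pv f)); auto. intros w Hw. apply pv_ext_loc. apply (locally_of_open Om); auto.
Qed.

Lemma C2_on_const Om c : open Om -> C2_on Om (fun _ => c).
Proof.
  intros Ho. split; [|split]; [apply C1_on_const; auto | |].
  - apply (C1_on_ext Om (fun _ => 0)); auto; [intros; rewrite pu_const; auto | apply C1_on_const; auto].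
  - apply (C1_on_ext Om (fun _ => 0)); auto; [intros; rewrite pv_const; auto | apply C1_on_const; auto].
Qed.
Lemma C2_on_mult Om f g : open Om -> C2_on Om f -> C2_on Om g -> C2_on Om (fun w => f w * g w).
Proof.
  intros Ho [F1 [F2 F3]] [G1 [G2 G3]]. split; [|split].
  - apply C1_on_mult; auto.
  - apply (C1_on_ext Om (fun w => pu f w * g w + f w * pu g w)); auto.
    + intros w Hw. destruct (F1 w Hw) as [? _]. destruct (G1 w Hw) as [? _]. symmetry. apply pu_mult; auto.
    + apply C1_on_plus; auto; apply C1_on_mult; auto.
  - apply (C1_on_ext Om (fun w => pv f w * g w + f w * pv g w)); auto.
    + intros w Hw. destruct (F1 w Hw) as [_ [? _]]. destruct (G1 w Hw) as [_ [? _]]. symmetry. apply pv_mult; auto.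
    + apply C1_on_plus; auto; apply C1_on_mult; auto.
Qed.

Lemma C2_on_plus Om f g : open Om -> C2_on Om f -> C2_on Om g -> C2_on Om (fun w => f w + g w).
Proof.
  intros Ho [F1 [F2 F3]] [G1 [G2 G3]]. split; [|split].
  - apply C1_on_plus; auto.
  - apply (C1_on_ext Om (fun w => pu f w + pu g w)); auto.
    + intros w Hw. destruct (F1 w Hw) as [? _]. destruct (G1 w Hw) as [? _]. symmetry. apply pu_plus; auto.
    + apply C1_on_plus; auto.
  - apply (C1_on_ext Om (fun w => pv f w + pv g w)); auto.
    + intros w Hw. destruct (F1 w Hw) as [_ [? _]]. destruct (G1 w Hw) as [_ [? _]]. symmetry. apply pv_plus; auto.
    + apply C1_on_plus; auto.
Qed.

Lemma C2_on_inv Om f : open Om -> (forall w, Om w -> f w <> 0) -> C2_on Om f -> C2_on Om (fun w => / f w).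
Proof.
  intros Ho Hn [F1 [F2 F3]].
  assert (I1 : C1_on Om (fun w => / f w)) by (apply C1_on_inv; auto).
  split; [|split]; auto.
  - apply (C1_on_ext Om (fun w => (-1 * pu f w) * ((/ f w) * (/ f w)))); auto.
    + intros w Hw. destruct (F1 w Hw) as [? _]. rewrite pu_inv; auto. ring.
    + apply C1_on_mult; auto. apply C1_on_mult; auto. apply C1_on_const; auto. apply C1_on_mult; auto.
  - apply (C1_on_ext Om (fun w => (-1 * pv f w) * ((/ f w) * (/ f w)))); auto.
    + intros w Hw. destruct (F1 w Hw) as [_ [? _]]. rewrite pv_inv; auto. ring.
    + apply C1_on_mult; auto. apply C1_on_mult; auto. apply C1_on_const; auto. apply C1_on_mult; auto.
Qed.

Lemma pv_pu_comm Om f z : open Om -> C2_on_R Om f -> Om z -> pv (pu f) z = pu (pv f) z.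
Proof.
  intros Ho Hf Hz. destruct z as [x y].
  destruct (open_square_nbhd Om (x, y) Ho Hz) as [r Hr].
  symmetry.
  pose proof (Schwarz (fun u v => f (u, v)) x y) as S.
  unfold pu, pv. simpl. apply S.
  - exists r. intros u v Hu Hv. assert (Huv : Om (u, v)) by (apply Hr; split; simpl; auto).
    destruct (Hf _ Huv) as [A1 [A2 [A3 [A4 [A5 _]]]]]. simpl in *. repeat split; auto.
  - destruct (Hf _ Hz) as [_ [_ [_ [_ [_ [_ [_ [_ [_ [_ [_ [A12 _]]]]]]]]]]]].
    apply continuity_2d_pt_of_continuous in A12. exact A12.
  - destruct (Hf _ Hz) as [_ [_ [_ [_ [_ [_ [_ [_ [_ [_ [A11 _]]]]]]]]]]].
    apply continuity_2d_pt_of_continuous in A11. exact A11.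
Qed.

Lemma Rabs_diff_le_of_derive_bound (f df : R -> R) x y K :
  (forall t, Rmin x y <= t <= Rmax x y -> is_derive f t (df t) /\ Rabs (df t) <= K) ->
  Rabs (f y - f x) <= K * Rabs (y - x).
Proof.
  intros H. destruct (MVT_gen f x y df) as [c [Hc E]].
  - intros t Ht. apply H. split; apply Rlt_le; apply Ht.
  - intros t Ht. apply continuity_pt_filterlim.
    apply (ex_derive_continuous (K:=R_AbsRing) (V:=R_NormedModule)). exists (df t). apply H. auto.
  - rewrite E, Rabs_mult. apply Rmult_le_compat_r. apply Rabs_pos. apply H. auto.
Qed.

Lemma primitive_increment_bound (U : C -> Prop) a b Q z w (r K : R) :
  (forall u, in_square z r u -> U u) -> is_primitive U a b Q ->
  (forall u, in_square z r u -> Rabs (a u) <= K /\ Rabs (b u) <= K) ->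
  in_square z r w -> Rabs (Q w - Q z) <= K * Rabs (fst w - fst z) + K * Rabs (snd w - snd z).
Proof.
  intros HU HP HK Hw. destruct z as [x1 y1], w as [x2 y2]. destruct Hw as [W1 W2]; simpl in *.
  assert (S1 : Rabs (Q (x2, y2) - Q (x1, y2)) <= K * Rabs (x2 - x1)).
  { apply (Rabs_diff_le_of_derive_bound (fun t => Q (t, y2)) (fun t => a (t, y2))). intros t Ht.
    assert (Hin : in_square (x1, y1) r (t, y2)).
    { split; simpl; [|exact W2].
      pose proof (Rabs_between x1 x2 t Ht). lra. }
    split; [apply (HP _ (HU _ Hin)) | apply (HK _ Hin)]. }
  assert (S2 : Rabs (Q (x1, y2) - Q (x1, y1)) <= K * Rabs (y2 - y1)).
  { apply (Rabs_diff_le_of_derive_bound (fun t => Q (x1, t)) (fun t => b (x1, t))). intros t Ht.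
    assert (Hin : in_square (x1, y1) r (x1, t)).
    { split; simpl; [| pose proof (Rabs_between y1 y2 t Ht); lra].
      rewrite Rminus_diag, Rabs_R0. pose proof (Rabs_pos (x2 - x1)). lra. }
    split; [apply (HP _ (HU _ Hin)) | apply (HK _ Hin)]. }
  replace (Q (x2, y2) - Q (x1, y1)) with ((Q (x2, y2) - Q (x1, y2)) + (Q (x1, y2) - Q (x1, y1))) by ring.
  eapply Rle_trans; [apply Rabs_triang | lra].
Qed.

Lemma primitive_continuous Om a b Q z : open Om -> is_primitive Om a b Q ->
  continuous a z -> continuous b z -> Om z -> continuous Q z.
Proof.
  intros Ho HP Ca Cb Hz.
  destruct (open_square_nbhd Om z Ho Hz) as [r Hr].
  destruct (continuous_square_elim a z Ca (mkposreal 1 Rlt_0_1)) as [d1 Hd1].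
  destruct (continuous_square_elim b z Cb (mkposreal 1 Rlt_0_1)) as [d2 Hd2].
  pose proof (pmin_l r (pmin d1 d2)). pose proof (pmin_r r (pmin d1 d2)).
  pose proof (pmin_l d1 d2). pose proof (pmin_r d1 d2).
  set (rho := pmin r (pmin d1 d2)) in *.
  set (K := Rabs (a z) + Rabs (b z) + 1).
  assert (HK : 0 < K) by (unfold K; pose proof (Rabs_pos (a z)); pose proof (Rabs_pos (b z)); lra).
  assert (Bd : forall u, in_square z rho u -> Rabs (a u) <= K /\ Rabs (b u) <= K).
  { intros u [U1 U2].
    pose proof (Hd1 u ltac:(lra) ltac:(lra)) as A1. pose proof (Hd2 u ltac:(lra) ltac:(lra)) as A2.
    simpl in A1, A2.
    pose proof (Rabs_triang_inv (a u) (a z)). pose proof (Rabs_triang_inv (b u) (b z)).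
    pose proof (Rabs_pos (a z)). pose proof (Rabs_pos (b z)). unfold K. split; lra. }
  assert (Hin : forall u, in_square z rho u -> Om u)
    by (intros u Hu; apply Hr, (in_square_mono _ rho); [lra | exact Hu]).
  apply continuous_square_intro. intros eps.
  assert (He : 0 < eps / (2 * K)) by (apply Rdiv_lt_0_compat; [apply cond_pos | lra]).
  exists (pmin rho (mkposreal _ He)). intros w W1 W2.
  pose proof (pmin_l rho (mkposreal _ He)) as P1. pose proof (pmin_r rho (mkposreal _ He)) as P2.
  change (pos (mkposreal _ He)) with (eps / (2 * K)) in P2.
  assert (Hw : in_square z rho w) by (split; lra).
  pose proof (primitive_increment_bound Om a b Q z w rho K Hin HP Bd Hw) as B.
  assert (K * Rabs (fst w - fst z) + K * Rabs (snd w - snd z) < K * (eps / (2 * K)) + K * (eps / (2 * K)))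
    by (apply Rplus_lt_compat; apply Rmult_lt_compat_l; lra).
  replace (K * (eps / (2 * K)) + K * (eps / (2 * K))) with (pos eps) in * by (field; lra). lra.
Qed.


(** * Wirtinger derivatives *)

Ltac csolve := apply injective_projections; unfold Re, Im; simpl; field; try (split; lra); try lra.

Lemma dzb_formula F z : dzb F z =
  ((pu (fun w => Re (F w)) z - pv (fun w => Im (F w)) z) / 2,
   (pu (fun w => Im (F w)) z + pv (fun w => Re (F w)) z) / 2).
Proof. unfold dzb, Cpu, Cpv. csolve. Qed.

Lemma dz_formula F z : dz F z =
  ((pu (fun w => Re (F w)) z + pv (fun w => Im (F w)) z) / 2,
   (pu (fun w => Im (F w)) z - pv (fun w => Re (F w)) z) / 2).
Proof. unfold dz, Cpu, Cpv. csolve. Qed.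

Lemma dz_toC f z : dz (toC f) z = (pu f z / 2, - pv f z / 2).
Proof.
  rewrite dz_formula.
  change (fun w => Re (toC f w)) with f. change (fun w => Im (toC f w)) with (fun _ : C => 0).
  rewrite pu_const, pv_const. csolve.
Qed.

Definition C1_on_C (Om : C -> Prop) (F : C -> C) : Prop :=
  C1_on Om (fun w => Re (F w)) /\ C1_on Om (fun w => Im (F w)).

Lemma C1_on_C_mult Om F G :
  open Om -> C1_on_C Om F -> C1_on_C Om G -> C1_on_C Om (fun w => (F w * G w)%C).
Proof.
  intros Ho [F1 F2] [G1 G2]. split.
  - apply (C1_on_ext Om (fun w => Re (F w) * Re (G w) + (-1) * (Im (F w) * Im (G w)))); [auto| |].
    + intros w _. unfold Re, Im; simpl; ring.
    + apply C1_on_plus; [exact Ho | apply C1_on_mult; auto |].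
      apply C1_on_mult; [exact Ho | apply C1_on_const, Ho | apply C1_on_mult; auto].
  - apply (C1_on_ext Om (fun w => Re (F w) * Im (G w) + Im (F w) * Re (G w))); [auto| |].
    + intros w _. unfold Re, Im; simpl; ring.
    + apply C1_on_plus; auto; apply C1_on_mult; auto.
Qed.

Lemma C1_on_C_minus Om F G : open Om -> C1_on_C Om F -> C1_on_C Om G -> C1_on_C Om (fun w => (F w - G w)%C).
Proof.
  intros Ho [F1 F2] [G1 G2]. split.
  - apply (C1_on_ext Om (fun w => Re (F w) + (-1) * Re (G w))); auto. intros w _. unfold Re, Im; simpl; ring.
    apply C1_on_plus; auto. apply C1_on_mult; auto. apply C1_on_const; auto.
  - apply (C1_on_ext Om (fun w => Im (F w) + (-1) * Im (G w))); auto. intros w _. unfold Re, Im; simpl; ring.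
    apply C1_on_plus; auto. apply C1_on_mult; auto. apply C1_on_const; auto.
Qed.

Lemma C1_on_C_const Om c : open Om -> C1_on_C Om (fun _ => c).
Proof. split; apply C1_on_const; auto. Qed.

Lemma dzb_mult Om F G z : C1_on_C Om F -> C1_on_C Om G -> Om z ->
  dzb (fun w => (F w * G w)%C) z = (dzb F z * G z + F z * dzb G z)%C.
Proof.
  intros [F1 F2] [G1 G2] Hz.
  destruct (F1 z Hz) as [a1 [a2 _]]. destruct (F2 z Hz) as [b1 [b2 _]].
  destruct (G1 z Hz) as [c1 [c2 _]]. destruct (G2 z Hz) as [d1 [d2 _]].
  rewrite !dzb_formula.
  change (fun w => Re (F w * G w)%C) with (fun w => Re (F w) * Re (G w) - Im (F w) * Im (G w)).
  change (fun w => Im (F w * G w)%C) with (fun w => Re (F w) * Im (G w) + Im (F w) * Re (G w)).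
  rewrite (pu_minus (fun w => Re (F w) * Re (G w)) (fun w => Im (F w) * Im (G w))).
  rewrite (pv_minus (fun w => Re (F w) * Re (G w)) (fun w => Im (F w) * Im (G w))).
  rewrite (pu_plus (fun w => Re (F w) * Im (G w)) (fun w => Im (F w) * Re (G w))).
  rewrite (pv_plus (fun w => Re (F w) * Im (G w)) (fun w => Im (F w) * Re (G w))).
  rewrite !pu_mult, !pv_mult; auto.
  csolve.
  all: apply ex_derive_mult; auto.
Qed.

Lemma dzb_minus Om F G z : C1_on_C Om F -> C1_on_C Om G -> Om z ->
  dzb (fun w => (F w - G w)%C) z = (dzb F z - dzb G z)%C.
Proof.
  intros [F1 F2] [G1 G2] Hz.
  destruct (F1 z Hz) as [a1 [a2 _]]. destruct (F2 z Hz) as [b1 [b2 _]].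
  destruct (G1 z Hz) as [c1 [c2 _]]. destruct (G2 z Hz) as [d1 [d2 _]].
  rewrite !dzb_formula.
  change (fun w => Re (F w - G w)%C) with (fun w => Re (F w) - Re (G w)).
  change (fun w => Im (F w - G w)%C) with (fun w => Im (F w) - Im (G w)).
  rewrite !pu_minus, !pv_minus; auto. csolve.
Qed.

Lemma dzb_const (c : C) z : dzb (fun _ => c) z = 0%C.
Proof. rewrite dzb_formula. rewrite !pu_const, !pv_const. csolve. Qed.

Lemma dzb_ext Om F G z : open Om -> Om z -> (forall w, Om w -> F w = G w) -> dzb F z = dzb G z.
Proof.
  intros Ho Hz E. rewrite !dzb_formula.
  rewrite (pu_ext_loc (fun w => Re (F w)) (fun w => Re (G w))),
          (pu_ext_loc (fun w => Im (F w)) (fun w => Im (G w))),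
          (pv_ext_loc (fun w => Re (F w)) (fun w => Re (G w))),
          (pv_ext_loc (fun w => Im (F w)) (fun w => Im (G w))).
  reflexivity.
  all: apply (locally_of_open Om); auto; intros w Hw; rewrite E; auto.
Qed.


(** * Potentials with prescribed [d/dz] *)

Lemma Re_dz_toC f z : Re (dz (toC f) z) = / 2 * pu f z.
Proof. rewrite dz_toC. unfold Re. simpl. field. Qed.

Lemma Im_dz_toC f z : Im (dz (toC f) z) = - / 2 * pv f z.
Proof. rewrite dz_toC. unfold Im. simpl. field. Qed.

Lemma C1_on_C_dz_toC Om f : open Om -> C2_on_R Om f -> C1_on_C Om (dz (toC f)).
Proof.
  intros Ho Hf. apply C2_on_R_iff in Hf as [_ [Hu Hv]]. split.
  - apply (C1_on_ext Om (fun w => / 2 * pu f w)); auto.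
    + intros w _. symmetry. apply Re_dz_toC.
    + apply C1_on_mult; auto. apply C1_on_const; auto.
  - apply (C1_on_ext Om (fun w => - / 2 * pv f w)); auto.
    + intros w _. symmetry. apply Im_dz_toC.
    + apply C1_on_mult; auto. apply C1_on_const; auto.
Qed.

(* [dzb (dz f)] is a quarter of the Laplacian of [f]: real, by Schwarz. *)
Lemma Im_dzb_dz_toC Om f z : open Om -> C2_on_R Om f -> Om z -> Im (dzb (dz (toC f)) z) = 0.
Proof.
  intros Ho Hf Hz. rewrite dzb_formula. unfold Im at 1. simpl.
  rewrite (pu_ext_loc (fun w => Im (dz (toC f) w)) (fun w => - / 2 * pv f w))
    by (apply filter_forall; intros; apply Im_dz_toC).
  rewrite (pv_ext_loc (fun w => Re (dz (toC f) w)) (fun w => / 2 * pu f w))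
    by (apply filter_forall; intros; apply Re_dz_toC).
  rewrite pu_scal, pv_scal, (pv_pu_comm Om f z) by auto. field.
Qed.

Lemma C2_on_primitive Om a b Q : open Om -> is_primitive Om a b Q ->
  C1_on Om a -> C1_on Om b -> C2_on Om Q.
Proof.
  intros Ho HQ Ha Hb.
  assert (puQ : forall w, Om w -> a w = pu Q w)
    by (intros w Hw; symmetry; apply is_derive_unique, (HQ w Hw)).
  assert (pvQ : forall w, Om w -> b w = pv Q w)
    by (intros w Hw; symmetry; apply is_derive_unique, (HQ w Hw)).
  split; [|split; [apply (C1_on_ext Om a) | apply (C1_on_ext Om b)]; auto].
  intros z Hz. destruct (HQ z Hz) as [Du Dv].
  destruct (Ha z Hz) as [_ [_ [Ca _]]]. destruct (Hb z Hz) as [_ [_ [Cb _]]].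
  repeat split.
  - exists (a z); exact Du.
  - exists (b z); exact Dv.
  - exact (primitive_continuous Om a b Q z Ho HQ Ca Cb Hz).
  - apply (continuous_ext_open Om a); auto.
  - apply (continuous_ext_open Om b); auto.
Qed.

(* [dz Q = F] for real [Q] means [dQ = 2 Re F du - 2 Im F dv], a closed form iff [dzb F] is real. *)
Lemma dz_potential_exists Om (F : C -> C) : simply_connected_domain Om ->
  C1_on_C Om F -> (forall z, Om z -> Im (dzb F z) = 0) ->
  exists Q, C2_on_R Om Q /\ forall z, Om z -> dz (toC Q) z = F z.
Proof.
  intros SC [DFr DFi] HF. pose proof SC as [[_ [Ho _]] _].
  set (a := fun w => 2 * Re (F w)). set (b := fun w => -2 * Im (F w)).
  assert (Da : C1_on Om a) by (apply C1_on_mult; auto; apply C1_on_const; auto).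
  assert (Db : C1_on Om b) by (apply C1_on_mult; auto; apply C1_on_const; auto).
  assert (Hcf : closed_form Om a b).
  { intros z Hz. destruct (Da z Hz) as [a1 [a2 [a3 [a4 a5]]]]. destruct (Db z Hz) as [b1 [b2 [b3 [b4 b5]]]].
    repeat split; auto.
    unfold a, b. rewrite pv_scal, pu_scal. pose proof (HF z Hz) as Z.
    rewrite dzb_formula in Z. unfold Im at 1 in Z. cbn [snd] in Z. lra. }
  destruct (poincare_lemma Om a b Ho Hcf SC) as [Q HQ].
  exists Q. split.
  - apply C2_on_R_iff, (C2_on_primitive Om a b); auto.
  - intros z Hz. destruct (HQ z Hz) as [Du Dv]. rewrite dz_toC.
    replace (pu Q z) with (a z) by (symmetry; exact (is_derive_unique _ _ _ Du)).
    replace (pv Q z) with (b z) by (symmetry; exact (is_derive_unique _ _ _ Dv)).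
    unfold a, b. apply injective_projections; unfold Re, Im; simpl; field.
Qed.

Lemma Cnorm2_neq0 (x : C) : x <> 0%C -> fst x * fst x + snd x * snd x <> 0.
Proof.
  intros H E. apply H. destruct x as [u v]. simpl in E.
  assert (u = 0) by nra. assert (v = 0) by nra. subst. reflexivity.
Qed.

Lemma Cmod_pow2 (x : C) : Cmod x ^ 2 = fst x * fst x + snd x * snd x.
Proof.
  unfold Cmod. rewrite pow2_sqrt by (apply Rplus_le_le_0_compat; apply pow2_ge_0). simpl. ring.
Qed.

Lemma mul_Re_sub_half_sqr (h : C) : (h * RtoC (Re h) - h * h / 2 = RtoC (Cmod h ^ 2 / 2))%C.
Proof. rewrite Cmod_pow2. destruct h as [p q]. csolve. Qed.

Lemma Cmod_inv_pow2_mul (h : C) : h <> 0%C -> Cmod (/ h) ^ 2 * Cmod h ^ 2 = 1.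
Proof.
  intros Hh. pose proof (Cnorm2_neq0 h Hh) as N0. rewrite !Cmod_pow2.
  destruct h as [p q]. simpl in *. field. intro E; apply N0; nra.
Qed.

Lemma second_to_first_kind_identity (h A B : C) : h <> 0%C ->
  (/ Cconj (/ h) * (RtoC (/ 2) * B - RtoC (Cmod (/ h) ^ 2) * (h * A - h * h / 2 * B))
   = - (A - RtoC (Re h) * B))%C.
Proof.
  intros Hh. pose proof (Cnorm2_neq0 h Hh) as N0. rewrite Cmod_pow2.
  destruct h as [p q], A as [a1 a2], B as [b1 b2]. simpl in N0.
  apply injective_projections; simpl; field; repeat split; intro E; apply N0; nra.
Qed.

Lemma C1_on_C_of_C2_on_C Om (h : C -> C) : C2_on_C Om h -> C1_on_C Om h.
Proof. intros [Hr Hi]. apply C2_on_R_iff in Hr, Hi. split; [apply Hr | apply Hi]. Qed.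

Lemma dzb_mult_holomorphic Om (h F : C -> C) z : C1_on_C Om h -> C1_on_C Om F -> Om z ->
  dzb h z = 0%C -> dzb (fun w => (h w * F w)%C) z = (h z * dzb F z)%C.
Proof.
  intros Hh HF Hz H0. rewrite (dzb_mult Om h F z) by auto. rewrite H0. csolve.
Qed.

Lemma C2_on_C_inv Om (h : C -> C) : open Om -> (forall w, Om w -> h w <> 0%C) ->
  C2_on_C Om h -> C2_on_C Om (fun w => / h w)%C.
Proof.
  intros Ho Hn [Hr Hi]. apply C2_on_R_iff in Hr, Hi.
  assert (Hnorm : C2_on Om (fun w => / (Re (h w) * Re (h w) + Im (h w) * Im (h w))))
    by (apply C2_on_inv; auto;
        [intros w Hw; apply Cnorm2_neq0; auto | apply C2_on_plus; auto; apply C2_on_mult; auto]).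
  split; apply C2_on_R_iff.
  - apply (C2_on_ext Om (fun w => Re (h w) * / (Re (h w) * Re (h w) + Im (h w) * Im (h w)))); auto.
    + intros w Hw. pose proof (Cnorm2_neq0 _ (Hn w Hw)) as N0. destruct (h w) as [p q].
      unfold Re, Im in *. simpl in *. field. intro E; apply N0; nra.
    + apply C2_on_mult; auto.
  - apply (C2_on_ext Om (fun w => (-1 * Im (h w)) * / (Re (h w) * Re (h w) + Im (h w) * Im (h w)))); auto.
    + intros w Hw. pose proof (Cnorm2_neq0 _ (Hn w Hw)) as N0. destruct (h w) as [p q].
      unfold Re, Im in *. simpl in *. field. intro E; apply N0; nra.
    + apply C2_on_mult; auto. apply C2_on_mult; auto. apply C2_on_const; auto.
Qed.

Lemma dzb_inv_holomorphic Om (h : C -> C) z : open Om -> (forall w, Om w -> h w <> 0%C) ->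
  C2_on_C Om h -> Om z -> dzb h z = 0%C -> dzb (fun w => / h w)%C z = 0%C.
Proof.
  intros Ho Hn Hh Hz H0.
  assert (Cg : C1_on_C Om (fun w => / h w)%C) by (apply C1_on_C_of_C2_on_C, C2_on_C_inv; auto).
  assert (E : dzb (fun w => (/ h w * h w)%C) z = 0%C).
  { rewrite (dzb_ext Om _ (fun _ => 1%C)) by (auto; intros w Hw; apply Cinv_l, Hn, Hw).
    apply dzb_const. }
  rewrite (dzb_mult Om _ h z Cg (C1_on_C_of_C2_on_C _ _ Hh) Hz), H0, Cmult_0_r, Cplus_0_r in E.
  apply (f_equal (fun u => (u * / h z)%C)) in E.
  rewrite Cmult_0_l, <- Cmult_assoc, Cinv_r, Cmult_1_r in E by (apply Hn, Hz). exact E.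
Qed.

(** * From the second kind to the first kind *)

Open Scope C_scope.

Definition prescribed_dzQ (h : C -> C) (M N : C -> R) (z : C) : C :=
  h z * dz (toC M) z - h z * h z / 2 * dz (toC N) z.

Section SecondKind.

Variables (Omega : C -> Prop) (h : C -> C) (M N : C -> R).
Hypotheses (Ho : open Omega) (Hwd : WD_second Omega h M N).

Lemma second_kind_h_neq0 z : Omega z -> h z <> 0.
Proof. intros Hz. apply (proj2 (proj2 (proj2 Hwd)) z Hz). Qed.

Lemma second_kind_dzb_h z : Omega z -> dzb h z = 0.
Proof. intros Hz. apply (proj2 (proj2 (proj2 Hwd)) z Hz). Qed.

Lemma C1_on_C_prescribed_dzQ : C1_on_C Omega (prescribed_dzQ h M N).
Proof.
  destruct Hwd as [Ch [CM [CN _]]]. pose proof (C1_on_C_of_C2_on_C _ _ Ch) as C1h.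
  pose proof (C1_on_C_dz_toC Omega M Ho CM) as C1A. pose proof (C1_on_C_dz_toC Omega N Ho CN) as C1B.
  assert (C1hh : C1_on_C Omega (fun w => h w * h w / 2)).
  { unfold Cdiv. apply (C1_on_C_mult Omega (fun w => h w * h w)); [exact Ho | |].
    - exact (C1_on_C_mult Omega h h Ho C1h C1h).
    - apply C1_on_C_const, Ho. }
  apply (C1_on_C_minus Omega); [exact Ho | apply C1_on_C_mult; assumption | apply C1_on_C_mult; assumption].
Qed.

(* Holomorphic factors pass through [dzb]; [h Re h - h^2/2 = |h|^2/2] is real. *)
Lemma dzb_prescribed_dzQ z : Omega z ->
  dzb (prescribed_dzQ h M N) z = RtoC (Cmod (h z) ^ 2 / 2) * dzb (dz (toC N)) z.
Proof.
  intros Hz. destruct Hwd as [Ch [CM [CN Hpt]]]. destruct (Hpt z Hz) as [_ [Hh [HM _]]].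
  pose proof (C1_on_C_of_C2_on_C _ _ Ch) as C1h.
  pose proof (C1_on_C_dz_toC Omega M Ho CM) as C1A. pose proof (C1_on_C_dz_toC Omega N Ho CN) as C1B.
  pose proof (C1_on_C_const Omega (/ 2) Ho) as C1c.
  pose proof (C1_on_C_mult Omega h h Ho C1h C1h) as C1h2.
  assert (Hhh : dzb (fun w => h w * h w / 2) z = 0).
  { unfold Cdiv. rewrite (dzb_mult Omega (fun w => h w * h w) (fun _ => / 2) z C1h2 C1c Hz).
    rewrite (dzb_mult_holomorphic Omega h h z C1h C1h Hz Hh), Hh, dzb_const. ring. }
  unfold prescribed_dzQ.
  rewrite (dzb_minus Omega (fun w => h w * dz (toC M) w) (fun w => h w * h w / 2 * dz (toC N) w) z
             (C1_on_C_mult Omega _ _ Ho C1h C1A)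
             (C1_on_C_mult Omega _ _ Ho (C1_on_C_mult Omega _ _ Ho C1h2 C1c) C1B) Hz).
  rewrite (dzb_mult_holomorphic Omega h _ z C1h C1A Hz Hh).
  rewrite (dzb_mult_holomorphic Omega (fun w => h w * h w / 2) _ z
             (C1_on_C_mult Omega _ _ Ho C1h2 C1c) C1B Hz Hhh).
  rewrite HM, <- (mul_Re_sub_half_sqr (h z)). ring.
Qed.

Lemma second_kind_potential_exists : simply_connected_domain Omega ->
  exists Q, C2_on_R Omega Q /\ forall z, Omega z -> dz (toC Q) z = prescribed_dzQ h M N z.
Proof.
  intros SC. apply dz_potential_exists; [exact SC | exact C1_on_C_prescribed_dzQ |].
  intros z Hz. rewrite dzb_prescribed_dzQ by exact Hz.
  destruct Hwd as [_ [_ [CN _]]]. pose proof (Im_dzb_dz_toC Omega N z Ho CN Hz) as HY.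
  destruct (dzb (dz (toC N)) z) as [y1 y2]. unfold Im in *. simpl in *. rewrite HY. ring.
Qed.

Lemma dz_toC_half (f : C -> R) z : dz (toC (fun w => (f w / 2)%R)) z = RtoC (/ 2) * dz (toC f) z.
Proof.
  rewrite !dz_toC. unfold pu, pv, Rdiv. rewrite !Derive_scal_l. csolve.
Qed.

Lemma second_kind_to_first_kind (Q : C -> R) : C2_on_R Omega Q ->
  (forall z, Omega z -> dz (toC Q) z = prescribed_dzQ h M N z) ->
  WD_first Omega (fun z => / h z) (fun z => (N z / 2)%R) Q /\
  forall z, Omega z ->
    / Cconj (/ h z) * (dz (toC (fun w => (N w / 2)%R)) z - RtoC (Cmod (/ h z) ^ 2) * dz (toC Q) z)
    = - (dz (toC M) z - RtoC (Re (h z)) * dz (toC N) z).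
Proof.
  intros CQ HdQ. destruct Hwd as [Ch [CM [CN Hpt]]].
  assert (Ident : forall z, Omega z ->
    / Cconj (/ h z) * (dz (toC (fun w => (N w / 2)%R)) z - RtoC (Cmod (/ h z) ^ 2) * dz (toC Q) z)
    = - (dz (toC M) z - RtoC (Re (h z)) * dz (toC N) z)).
  { intros z Hz. rewrite (HdQ z Hz), dz_toC_half.
    exact (second_to_first_kind_identity _ _ _ (second_kind_h_neq0 z Hz)). }
  split; [|exact Ident].
  split; [exact (C2_on_C_inv Omega h Ho second_kind_h_neq0 Ch)|].
  split.
  { apply C2_on_R_iff, (C2_on_ext Omega (fun w => N w * / 2)%R _ Ho (fun w _ => eq_refl)).
    exact (C2_on_mult Omega _ _ Ho (proj1 (C2_on_R_iff Omega N) CN) (C2_on_const Omega _ Ho)). }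
  split; [exact CQ|].
  intros z Hz. pose proof (second_kind_h_neq0 z Hz) as Hh.
  split; [|split; [|split]].
  - intros E. apply Hh. rewrite <- (Cmult_1_l (h z)), <- (Cinv_r (h z) Hh), E. ring.
  - exact (dzb_inv_holomorphic Omega h z Ho second_kind_h_neq0 Ch Hz (second_kind_dzb_h z Hz)).
  - pose proof (C1_on_C_dz_toC Omega N Ho CN) as C1B.
    rewrite (dzb_ext Omega (dz (toC Q)) (prescribed_dzQ h M N) z Ho Hz HdQ).
    rewrite (dzb_ext Omega _ (fun w => RtoC (/ 2) * dz (toC N) w) z Ho Hz (fun w _ => dz_toC_half N w)).
    transitivity (RtoC (/ 2) * dzb (dz (toC N)) z).
    { exact (dzb_mult_holomorphic Omega (fun _ => RtoC (/ 2)) _ z (C1_on_C_const Omega _ Ho) C1B Hz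
               (dzb_const _ z)). }
    rewrite (dzb_prescribed_dzQ z Hz), Cmult_assoc, <- RtoC_mult.
    replace (Cmod (/ h z) ^ 2 * (Cmod (h z) ^ 2 / 2))%R with (/ 2)%R; [reflexivity|].
    unfold Rdiv. rewrite <- Rmult_assoc, (Cmod_inv_pow2_mul _ Hh). ring.
  - intros E0. destruct (Hpt z Hz) as [_ [_ [_ Hne]]]. apply Hne.
    pose proof (Ident z Hz) as I0. rewrite E0, Cmult_0_r in I0.
    replace (dz (toC M) z - RtoC (Re (h z)) * dz (toC N) z)
      with (- - (dz (toC M) z - RtoC (Re (h z)) * dz (toC N) z)) by ring.
    rewrite <- I0. ring.
Qed.

End SecondKind.

Theorem mainTheorem2 (Omega : C -> Prop) (h : C -> C) (M N : C -> R) :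
  simply_connected_domain Omega ->
  WD_second Omega h M N ->
  let g : C -> C := fun z => / h z in
  let P : C -> R := fun z => (N z / 2)%R in
  (exists Q : C -> R, C2_on_R Omega Q /\
     forall z, Omega z ->
       dz (toC Q) z = h z * dz (toC M) z - h z * h z / 2 * dz (toC N) z) /\
  (forall Q : C -> R, C2_on_R Omega Q ->
     (forall z, Omega z ->
       dz (toC Q) z = h z * dz (toC M) z - h z * h z / 2 * dz (toC N) z) ->
     WD_first Omega g P Q /\
     forall z, Omega z ->
       / Cconj (g z) * (dz (toC P) z - RtoC (Cmod (g z) ^ 2) * dz (toC Q) z)
       = - (dz (toC M) z - RtoC (Re (h z)) * dz (toC N) z)).
Proof.
  intros SC WD g P. pose proof SC as [[_ [Ho _]] _]. split.
  - exact (second_kind_potential_exists Omega h M N Ho WD SC).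
  - exact (second_kind_to_first_kind Omega h M N Ho WD).
Qed.
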